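(* For all $A>0$, $M>0$, $\nu\in[\frac12,1)$ and $R>0$ there exists a unique positive solution $w_{A,M,\nu,R}\in\mathscr{C}^2([-R,R])$ of \[ -w''=M(A-w)w\ \text{in }(-R,R),\qquad w(\pm R)=\nu A . \] It is even and satisfies $\nu A<w_{A,M,\nu,R}(x)<A$ for all $x\in(-R,R)$. Let $\Phi(A,M,\nu,R)=w'_{A,M,\nu,R}(-R)$. Then: (1) $\Phi$ is positive and continuous; (2) $\lim_{R\to0^+}\Phi(A,M,\nu,R)=0$; (3) there exists $\gamma_{A,M,\nu}\in(0,+\infty)$ with $\gamma_{A,M,\nu}=\lim_{R\to+\infty}\Phi(A,M,\nu,R)$; the map $(A,M,\nu)\mapsto\gamma_{A,M,\nu}$ is continuous, increasing with respect to $A$ and $M$, and decreasing with respect to $\nu$; in particular $\lim_{\nu\to1}\gamma_{A,M,\nu}=0$ and $0<\gamma_{A,M,\nu}<\gamma_{A,M,\frac12}$ for $\nu\in(\frac12,1)$; (4) $R\mapsto\Phi(A,M,\nu,R)$ is an increasing homeomorphism from $(0,+\infty)$ onto $(0,\gamma_{A,M,\nu})$; (5) $\nu\mapsto\Phi(A,M,\nu,R)$ is a decreasing homeomorphism from $[\frac12,1)$ onto $(0,\Phi(A,M,\frac12,R)]$. *)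

From Stdlib Require Import Reals Lra.
Open Scope R_scope.

Definition Icc (a b : R) : R -> Prop := fun x => a <= x <= b.

(* derivative of f at x relative to the set D (one-sided at endpoints of an interval) *)
Definition deriv_within (D : R -> Prop) (f : R -> R) (x l : R) : Prop :=
  forall eps : R, 0 < eps -> exists delta : R, 0 < delta /\
    forall y : R, D y -> y <> x -> Rabs (y - x) < delta ->
      Rabs ((f y - f x) / (y - x) - l) < eps.

Definition cont_within (D : R -> Prop) (f : R -> R) (x : R) : Prop :=
  forall eps : R, 0 < eps -> exists delta : R, 0 < delta /\
    forall y : R, D y -> Rabs (y - x) < delta -> Rabs (f y - f x) < eps.

Definition cont_on (D : R -> Prop) (f : R -> R) : Prop :=
  forall x, D x -> cont_within D f x.

Definition C2_with (a b : R) (w w1 w2 : R -> R) : Prop :=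
  forall x, Icc a b x ->
    deriv_within (Icc a b) w x (w1 x) /\
    deriv_within (Icc a b) w1 x (w2 x) /\
    cont_within (Icc a b) w2 x.

Definition adm (A M nu Rr : R) : Prop :=
  0 < A /\ 0 < M /\ 1/2 <= nu < 1 /\ 0 < Rr.

Definition pos_sol (A M nu Rr : R) (w : R -> R) : Prop :=
  exists w1 w2 : R -> R,
    C2_with (- Rr) Rr w w1 w2 /\
    (forall x, - Rr < x < Rr -> - w2 x = M * (A - w x) * w x) /\
    w (- Rr) = nu * A /\ w Rr = nu * A /\
    (forall x, Icc (- Rr) Rr x -> 0 < w x).

Definition cont3_on (D : R -> R -> R -> Prop) (f : R -> R -> R -> R) : Prop :=
  forall a b c, D a b c -> forall eps, 0 < eps -> exists delta, 0 < delta /\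
    forall a' b' c', D a' b' c' ->
      Rabs (a' - a) < delta -> Rabs (b' - b) < delta -> Rabs (c' - c) < delta ->
      Rabs (f a' b' c' - f a b c) < eps.

Definition cont4_on (D : R -> R -> R -> R -> Prop) (f : R -> R -> R -> R -> R) : Prop :=
  forall a b c d, D a b c d -> forall eps, 0 < eps -> exists delta, 0 < delta /\
    forall a' b' c' d', D a' b' c' d' ->
      Rabs (a' - a) < delta -> Rabs (b' - b) < delta -> Rabs (c' - c) < delta ->
      Rabs (d' - d) < delta ->
      Rabs (f a' b' c' d' - f a b c d) < eps.

Definition strict_incr_on (D : R -> Prop) (f : R -> R) : Prop :=
  forall x y, D x -> D y -> x < y -> f x < f y.
Definition strict_decr_on (D : R -> Prop) (f : R -> R) : Prop :=
  forall x y, D x -> D y -> x < y -> f y < f x.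

Definition homeo_onto (D E : R -> Prop) (f : R -> R) : Prop :=
  (forall x, D x -> E (f x)) /\ cont_on D f /\
  exists g : R -> R,
    (forall y, E y -> D (g y)) /\ cont_on E g /\
    (forall x, D x -> g (f x) = x) /\ (forall y, E y -> f (g y) = y).

(* Scaling [w(x) = A u(sqrt(M A) x)] reduces the problem to [u'' = u^2 - u] on [[-L, L]],
   [L = sqrt(M A) R], with [u(-L) = u(L) = nu].  By the maximum principle a positive solution
   takes values in [[nu, 1]]; two solutions above [1/2] differ by a function [d] with
   [d'' = d (w + v - 1)], which has the sign of [d], so they coincide, and for a larger [nu]
   the difference is nonnegative and convex, which orders the edge slopes.  The solution
   with maximum [m = u(0)] comes from the energy identity [u'^2 / 2 = pot m - pot u]: its
   half-length is a time map [T(nu, m)] increasing from [0] to [+oo] on [(nu, 1)], and its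
   edge slope is [sqrt (2 (pot m - pot nu))].  Hence [Phi = A sqrt(M A) sqrt (2 (pot m - pot nu))]
   with [T(nu, m) = L], increasing in [R] towards [gamma = A sqrt(M A) sqrt (2 (pot 1 - pot nu))]. *)

From Stdlib Require Import Reals Lra Psatz ClassicalEpsilon Ranalysis5.
From Coquelicot Require Import Coquelicot.
Open Scope R_scope.

Definition clamp (a b x : R) := Rmax a (Rmin b x).

Lemma clamp_in_Icc a b x : a <= b -> Icc a b (clamp a b x).
Proof. intros; unfold Icc, clamp, Rmax, Rmin; repeat destruct Rle_dec; lra. Qed.

Lemma clamp_id a b x : Icc a b x -> clamp a b x = x.
Proof. unfold Icc; intros; unfold clamp, Rmax, Rmin; repeat destruct Rle_dec; lra. Qed.

Lemma clamp_lipschitz a b x y : a <= b -> Rabs (clamp a b x - clamp a b y) <= Rabs (x - y).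
Proof.
  intros; unfold clamp, Rmax, Rmin; repeat destruct Rle_dec;
  unfold Rabs; repeat destruct Rcase_abs; lra.
Qed.

Lemma continuity_clamp_comp a b f : a <= b -> cont_on (Icc a b) f ->
  continuity (fun x => f (clamp a b x)).
Proof.
  intros Hab Hf x eps Heps.
  destruct (Hf (clamp a b x) (clamp_in_Icc a b x Hab) eps Heps) as [d [Hd H]].
  exists d; split; [lra|]. intros y [_ Hy]. simpl in *; unfold R_dist in *.
  apply H; [apply clamp_in_Icc; auto|].
  eapply Rle_lt_trans; [apply clamp_lipschitz; auto|exact Hy].
Qed.

Lemma continuity_pt_cont_within D f x : continuity_pt f x -> cont_within D f x.
Proof.
  intros H eps Heps. destruct (H eps Heps) as [d [Hd H2]].
  exists d; split; auto. intros y _ Hy.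
  destruct (Req_dec y x) as [->|Hne]; [rewrite Rminus_diag, Rabs_R0; auto|].
  apply (H2 y). split; [split; [exact I|auto]|exact Hy].
Qed.

Lemma cont_within_subset (D E : R -> Prop) f x : (forall y, E y -> D y) ->
  cont_within D f x -> cont_within E f x.
Proof.
  intros HS H eps Heps. destruct (H eps Heps) as [d [Hd H2]]. exists d; split; auto.
Qed.

Lemma cont_on_subset (D E : R -> Prop) f : (forall y, E y -> D y) ->
  cont_on D f -> cont_on E f.
Proof. intros HS H x Hx. apply (cont_within_subset D); auto. Qed.

Lemma cont_on_Icc_subset a b a' b' f : a <= a' -> b' <= b ->
  cont_on (Icc a b) f -> cont_on (Icc a' b') f.
Proof. intros H1 H2. apply cont_on_subset. unfold Icc; intros; lra. Qed.

Lemma cont_within_ext D f g x : (forall y, D y -> f y = g y) -> D x ->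
  cont_within D g x -> cont_within D f x.
Proof.
  intros E Hx H eps Heps. destruct (H eps Heps) as [d [Hd H2]].
  exists d; split; auto. intros y Hy Hyd. rewrite !E; auto.
Qed.

Lemma cont_within_opp D f x : cont_within D f x -> cont_within D (fun y => - f y) x.
Proof.
  intros H eps Heps. destruct (H eps Heps) as [d [Hd H2]].
  exists d; split; auto. intros y Hy Hyd.
  replace (- f y - - f x) with (- (f y - f x)) by ring. rewrite Rabs_Ropp; auto.
Qed.

Lemma cont_within_minus D f g x : cont_within D f x -> cont_within D g x ->
  cont_within D (fun y => f y - g y) x.
Proof.
  intros Hf Hg eps Heps.
  destruct (Hf (eps / 2)) as [d1 [Hd1 H1]]; [lra|].
  destruct (Hg (eps / 2)) as [d2 [Hd2 H2]]; [lra|].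
  exists (Rmin d1 d2); split; [now apply Rmin_pos|].
  intros y Hy Hyx.
  specialize (H1 y Hy (Rlt_le_trans _ _ _ Hyx (Rmin_l _ _))).
  specialize (H2 y Hy (Rlt_le_trans _ _ _ Hyx (Rmin_r _ _))).
  replace (f y - g y - (f x - g x)) with ((f y - f x) - (g y - g x)) by ring.
  eapply Rle_lt_trans; [apply Rabs_triang|]. rewrite Rabs_Ropp. lra.
Qed.

Lemma IVT_Icc a b f y : a <= b -> cont_on (Icc a b) f ->
  Rmin (f a) (f b) <= y <= Rmax (f a) (f b) -> exists x, Icc a b x /\ f x = y.
Proof.
  intros Hab Hf Hy.
  assert (Ea : f (clamp a b a) = f a) by (rewrite clamp_id; unfold Icc; auto; lra).
  assert (Eb : f (clamp a b b) = f b) by (rewrite clamp_id; unfold Icc; auto; lra).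
  rewrite <- Ea, <- Eb in Hy.
  destruct (IVT_gen _ a b y (continuity_clamp_comp a b f Hab Hf) Hy) as [x [Hx Hfx]].
  rewrite Rmin_left, Rmax_right in Hx by lra.
  exists x. rewrite clamp_id in Hfx by exact Hx. auto.
Qed.

Lemma Icc_max_attained a b f : a <= b -> cont_on (Icc a b) f ->
  exists x0, Icc a b x0 /\ forall x, Icc a b x -> f x <= f x0.
Proof.
  intros Hab Hf.
  destruct (continuity_ab_maj (fun x => f (clamp a b x)) a b Hab) as [x0 [H1 H2]].
  { intros; apply (continuity_clamp_comp a b f Hab Hf). }
  exists x0. split; auto. intros x Hx. specialize (H1 x Hx). rewrite !clamp_id in H1; auto.
Qed.

Lemma deriv_within_of_is_derive D f x l : is_derive f x l -> deriv_within D f x l.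
Proof.
  intros H eps Heps. apply is_derive_Reals in H.
  destruct (H eps Heps) as [d H2].
  exists d; split; [apply cond_pos|]. intros y _ Hy Hd.
  specialize (H2 (y - x)). replace (x + (y - x)) with y in H2 by ring.
  apply H2; auto. lra.
Qed.

Lemma is_derive_of_deriv_within_interior a b f x l : a < x < b ->
  deriv_within (Icc a b) f x l -> is_derive f x l.
Proof.
  intros Hx H. apply is_derive_Reals. intros eps Heps.
  destruct (H eps Heps) as [d [Hd H2]].
  set (e := Rmin d (Rmin (x - a) (b - x))).
  assert (He : 0 < e) by (unfold e, Rmin; repeat destruct Rle_dec; lra).
  exists (mkposreal e He). intros h Hh0 Hh. simpl in Hh.
  assert (Hh' : Rabs h < d /\ Rabs h < x - a /\ Rabs h < b - x).
  { unfold e, Rmin in Hh; repeat destruct Rle_dec; repeat split; lra. }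
  specialize (H2 (x + h)). replace (x + h - x) with h in H2 by ring.
  apply H2; [unfold Icc; unfold Rabs in Hh'; destruct Rcase_abs; lra|lra|lra].
Qed.

Lemma deriv_within_cont_within D f x l : deriv_within D f x l -> cont_within D f x.
Proof.
  intros H eps Heps.
  destruct (H 1 Rlt_0_1) as [d [Hd H2]].
  pose proof (Rabs_pos l).
  exists (Rmin d (eps / (Rabs l + 1))).
  split; [apply Rmin_pos; auto; apply Rdiv_lt_0_compat; lra|].
  intros y Hy Hyx.
  destruct (Req_dec y x) as [->|Hne]; [rewrite Rminus_diag, Rabs_R0; auto|].
  specialize (H2 y Hy Hne (Rlt_le_trans _ _ _ Hyx (Rmin_l _ _))).
  assert (Hyx2 := Rlt_le_trans _ _ _ Hyx (Rmin_r _ _)).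
  assert (Hq : Rabs ((f y - f x) / (y - x)) < Rabs l + 1).
  { pose proof (Rabs_triang_inv ((f y - f x) / (y - x)) l). lra. }
  replace (f y - f x) with ((f y - f x) / (y - x) * (y - x)) by (field; lra).
  rewrite Rabs_mult.
  apply Rle_lt_trans with ((Rabs l + 1) * Rabs (y - x)).
  - apply Rmult_le_compat_r; [apply Rabs_pos|lra].
  - apply Rmult_lt_reg_r with (/ (Rabs l + 1)); [apply Rinv_0_lt_compat; lra|].
    replace ((Rabs l + 1) * Rabs (y - x) * / (Rabs l + 1)) with (Rabs (y - x)) by (field; lra).
    exact Hyx2.
Qed.

Lemma is_derive_cont_within D f x l : is_derive f x l -> cont_within D f x.
Proof. intros H; eapply deriv_within_cont_within, deriv_within_of_is_derive, H. Qed.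

Lemma is_derive_continuity_pt f x l : is_derive f x l -> continuity_pt f x.
Proof. intros H. apply is_derive_Reals in H. apply derivable_continuous_pt. exists l; auto. Qed.

Lemma deriv_within_ext D f g x l : (forall y, D y -> f y = g y) -> D x ->
  deriv_within D g x l -> deriv_within D f x l.
Proof.
  intros E Hx H eps Heps. destruct (H eps Heps) as [d [Hd H2]].
  exists d; split; auto. intros y Hy Hne Hyd. rewrite !E; auto.
Qed.

Lemma deriv_within_opp D f x l : deriv_within D f x l -> deriv_within D (fun y => - f y) x (- l).
Proof.
  intros H eps Heps. destruct (H eps Heps) as [d [Hd H2]].
  exists d; split; auto. intros y Hy Hne Hyd.
  replace ((- f y - - f x) / (y - x) - - l) with (- ((f y - f x) / (y - x) - l)) by (field; lra).
  rewrite Rabs_Ropp; auto.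
Qed.

Lemma MVT_Icc a b f df : a < b -> cont_on (Icc a b) f ->
  (forall x, a < x < b -> is_derive f x (df x)) ->
  exists c, a < c < b /\ f b - f a = df c * (b - a).
Proof.
  intros Hab Hf Hd.
  set (h := fun x => f (clamp a b x)).
  assert (Hh : forall c, a < c < b -> derivable_pt_lim h c (df c)).
  { intros c Hc. apply is_derive_Reals.
    apply (is_derive_ext_loc f); [|apply Hd; auto].
    assert (He : 0 < Rmin (c - a) (b - c)) by (apply Rmin_pos; lra).
    exists (mkposreal _ He). intros y Hy.
    unfold ball in Hy; simpl in Hy; unfold AbsRing_ball, abs, minus, plus, opp in Hy; simpl in Hy.
    unfold h; rewrite clamp_id; auto.
    unfold Icc, Rmin in *; destruct Rle_dec; unfold Rabs in Hy; destruct Rcase_abs; lra. }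
  assert (pr1 : forall c, a < c < b -> derivable_pt h c) by (intros c Hc; exists (df c); apply Hh; auto).
  assert (pr2 : forall c, a < c < b -> derivable_pt id c) by (intros; apply derivable_pt_id).
  destruct (MVT h id a b pr1 pr2 Hab) as [c [P Heq]].
  { intros; apply (continuity_clamp_comp a b f (Rlt_le _ _ Hab) Hf). }
  { intros; apply derivable_continuous_pt, derivable_pt_id. }
  exists c; split; auto.
  rewrite (derive_pt_eq_0 h c (df c) (pr1 c P) (Hh c P)) in Heq.
  rewrite (derive_pt_eq_0 id c 1 (pr2 c P) (derivable_pt_lim_id c)) in Heq.
  unfold h, id in Heq. rewrite !clamp_id in Heq by (unfold Icc; lra). lra.
Qed.

Lemma Icc_lt_of_pos_derive a b f df : a < b -> cont_on (Icc a b) f ->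
  (forall x, a < x < b -> is_derive f x (df x) /\ 0 < df x) -> f a < f b.
Proof.
  intros Hab Hf Hd.
  destruct (MVT_Icc a b f df Hab Hf) as [c [Hc E]]; [intros; apply Hd; auto|].
  assert (0 < df c * (b - a)) by (apply Rmult_lt_0_compat; [apply Hd|]; lra). lra.
Qed.

Lemma Icc_le_of_nonneg_derive a b f df : a < b -> cont_on (Icc a b) f ->
  (forall x, a < x < b -> is_derive f x (df x) /\ 0 <= df x) -> f a <= f b.
Proof.
  intros Hab Hf Hd.
  destruct (MVT_Icc a b f df Hab Hf) as [c [Hc E]]; [intros; apply Hd; auto|].
  assert (0 <= df c * (b - a)) by (apply Rmult_le_pos; [apply Hd|]; lra). lra.
Qed.

Lemma is_derive_0_at_interior_max a b f x0 l : a < x0 < b ->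
  (forall x, a < x < b -> f x <= f x0) -> is_derive f x0 l -> l = 0.
Proof.
  intros Hx Hmax Hd. apply is_derive_Reals in Hd.
  destruct (Rtotal_order l 0) as [Hl|[Hl|Hl]]; auto; exfalso.
  - destruct (Hd (- l / 2)) as [d Hd2]; [lra|].
    pose proof (cond_pos d).
    set (h := - Rmin (d / 2) ((x0 - a) / 2)).
    assert (Hh : 0 < - h /\ - h <= d / 2 /\ - h <= (x0 - a) / 2).
    { unfold h, Rmin; destruct Rle_dec; lra. }
    assert (Hfx : f (x0 + h) <= f x0) by (apply Hmax; lra).
    assert (Hq : 0 <= (f (x0 + h) - f x0) / h).
    { replace ((f (x0 + h) - f x0) / h) with ((f x0 - f (x0 + h)) / (- h)) by (field; lra).
      apply Rdiv_le_0_compat; lra. }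
    specialize (Hd2 h ltac:(lra) ltac:(rewrite Rabs_left by lra; lra)).
    unfold Rabs in Hd2; destruct Rcase_abs; lra.
  - destruct (Hd (l / 2)) as [d Hd2]; [lra|].
    pose proof (cond_pos d).
    set (h := Rmin (d / 2) ((b - x0) / 2)).
    assert (Hh : 0 < h /\ h <= d / 2 /\ h <= (b - x0) / 2).
    { unfold h, Rmin; destruct Rle_dec; lra. }
    assert (Hfx : f (x0 + h) <= f x0) by (apply Hmax; lra).
    assert (Hq : (f (x0 + h) - f x0) / h <= 0).
    { replace ((f (x0 + h) - f x0) / h) with (- ((f x0 - f (x0 + h)) / h)) by (field; lra).
      assert (0 <= (f x0 - f (x0 + h)) / h) by (apply Rdiv_le_0_compat; lra). lra. }
    specialize (Hd2 h ltac:(lra) ltac:(rewrite Rabs_right by lra; lra)).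
    unfold Rabs in Hd2; destruct Rcase_abs; lra.
Qed.

(* If [f''(x0) > 0] then, as [f'(x0) = 0], [f' > 0] just right of [x0], so [f] increases there. *)
Lemma second_derive_nonpos_at_interior_max a b f f1 x0 c : a < x0 < b ->
  (forall x, a < x < b -> f x <= f x0) ->
  (forall x, a < x < b -> is_derive f x (f1 x)) -> is_derive f1 x0 c -> c <= 0.
Proof.
  intros Hx Hmax Hd Hd1. apply Rnot_lt_le; intro Hc.
  assert (H0 : f1 x0 = 0) by (apply (is_derive_0_at_interior_max a b f x0); auto).
  apply is_derive_Reals in Hd1.
  destruct (Hd1 (c / 2)) as [d Hd2]; [lra|].
  pose proof (cond_pos d).
  set (h := Rmin (d / 2) ((b - x0) / 2)).
  assert (Hh : 0 < h /\ h <= d / 2 /\ h <= (b - x0) / 2).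
  { unfold h, Rmin; destruct Rle_dec; lra. }
  assert (Hpos : forall y, x0 < y < x0 + h -> 0 < f1 y).
  { intros y Hy. specialize (Hd2 (y - x0)). replace (x0 + (y - x0)) with y in Hd2 by ring.
    rewrite H0, Rminus_0_r in Hd2.
    specialize (Hd2 ltac:(lra) ltac:(rewrite Rabs_right by lra; lra)).
    assert (Hq : 0 < f1 y / (y - x0)) by (unfold Rabs in Hd2; destruct Rcase_abs; lra).
    replace (f1 y) with (f1 y / (y - x0) * (y - x0)) by (field; lra).
    apply Rmult_lt_0_compat; lra. }
  assert (f x0 < f (x0 + h)); [|assert (f (x0 + h) <= f x0) by (apply Hmax; lra); lra].
  apply (Icc_lt_of_pos_derive _ _ f f1); [lra| |].
  - intros y Hy. apply (is_derive_cont_within _ f y (f1 y)), Hd. unfold Icc in Hy; lra.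
  - intros y Hy. split; [apply Hd; lra|apply Hpos; lra].
Qed.

Definition C2_open a b (f f1 f2 : R -> R) :=
  (forall x, a < x < b -> is_derive f x (f1 x) /\ is_derive f1 x (f2 x)) /\
  cont_on (Icc a b) f /\ cont_on (Icc a b) f1.

Lemma C2_open_minus a b f f1 f2 g g1 g2 : C2_open a b f f1 f2 -> C2_open a b g g1 g2 ->
  C2_open a b (fun x => f x - g x) (fun x => f1 x - g1 x) (fun x => f2 x - g2 x).
Proof.
  intros [Hf [Cf Cf1]] [Hg [Cg Cg1]].
  split; [|split; intros x Hx; apply cont_within_minus; auto].
  intros x Hx. destruct (Hf x Hx) as [H1 H2], (Hg x Hx) as [H3 H4].
  split; [exact (is_derive_minus _ _ _ _ _ H1 H3)|exact (is_derive_minus _ _ _ _ _ H2 H4)].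
Qed.

Lemma C2_open_opp a b f f1 f2 : C2_open a b f f1 f2 ->
  C2_open a b (fun x => - f x) (fun x => - f1 x) (fun x => - f2 x).
Proof.
  intros [Hf [Cf Cf1]].
  split; [|split; intros x Hx; apply cont_within_opp; auto].
  intros x Hx. destruct (Hf x Hx) as [H1 H2].
  split; [exact (is_derive_opp _ _ _ H1)|exact (is_derive_opp _ _ _ H2)].
Qed.

Lemma max_principle a b K f f1 f2 : a < b -> C2_open a b f f1 f2 ->
  f a <= K -> f b <= K -> (forall x, a < x < b -> K < f x -> 0 < f2 x) ->
  forall x, Icc a b x -> f x <= K.
Proof.
  intros Hab [Hd [Cf _]] Ha Hb Hconvex.
  destruct (Icc_max_attained a b f (Rlt_le _ _ Hab) Cf) as [x0 [Hx0 Hmax]].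
  intros x Hx. apply (Rle_trans _ (f x0)); [apply Hmax; auto|].
  apply Rnot_lt_le; intro Hgt.
  assert (Hint : a < x0 < b).
  { unfold Icc in Hx0. split; apply Rnot_le_lt; intro;
      [replace x0 with a in Hgt by lra|replace x0 with b in Hgt by lra]; lra. }
  assert (f2 x0 <= 0); [|specialize (Hconvex x0 Hint Hgt); lra].
  apply (second_derive_nonpos_at_interior_max a b f f1 x0); auto.
  - intros; apply Hmax; unfold Icc; lra.
  - intros; apply Hd; auto.
  - apply Hd; auto.
Qed.

Lemma min_principle a b K f f1 f2 : a < b -> C2_open a b f f1 f2 ->
  K <= f a -> K <= f b -> (forall x, a < x < b -> f x < K -> f2 x < 0) ->
  forall x, Icc a b x -> K <= f x.
Proof.
  intros Hab Hf Ha Hb Hconcave x Hx.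
  enough (- f x <= - K) by lra.
  apply (max_principle a b (- K) _ _ _ Hab (C2_open_opp a b f f1 f2 Hf)); auto; try lra.
  intros y Hy Hlt. specialize (Hconcave y Hy ltac:(lra)). lra.
Qed.

Definition ode_sol a b (A M : R) (w w1 w2 : R -> R) :=
  C2_open a b w w1 w2 /\ forall x, a < x < b -> - w2 x = M * (A - w x) * w x.

Lemma ode_sol_between a b A M nu w w1 w2 : a < b -> 0 < A -> 0 < M -> 0 < nu < 1 ->
  ode_sol a b A M w w1 w2 -> w a = nu * A -> w b = nu * A ->
  (forall x, Icc a b x -> 0 < w x) -> forall x, Icc a b x -> nu * A <= w x <= A.
Proof.
  intros Hab HA HM Hnu [Hs Heq] Ha Hb Hpos.
  assert (Hw : forall x, a < x < b -> 0 < w x) by (intros; apply Hpos; unfold Icc; lra).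
  assert (Hup : forall x, Icc a b x -> w x <= A).
  { apply (max_principle a b A w w1 w2); auto; try nra.
    intros x Hx Hgt. specialize (Heq x Hx). specialize (Hw x Hx).
    assert (0 < M * (w x - A) * w x) by (apply Rmult_lt_0_compat; [apply Rmult_lt_0_compat|]; lra).
    lra. }
  intros x Hx. split; [|apply Hup; auto]. revert x Hx.
  apply (min_principle a b (nu * A) w w1 w2); auto; try lra.
  intros x Hx Hlt. specialize (Heq x Hx). specialize (Hw x Hx).
  assert (0 < M * (A - w x) * w x) by (apply Rmult_lt_0_compat; [apply Rmult_lt_0_compat|]; nra).
  lra.
Qed.

(* Where [w > v], both above [A/2], the difference satisfies
   [(w - v)'' = M (w - v) (w + v - A) > 0]. *)
Lemma ode_sol_le a b A M w w1 w2 v v1 v2 : a < b -> 0 < M ->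
  ode_sol a b A M w w1 w2 -> ode_sol a b A M v v1 v2 -> w a = v a -> w b = v b ->
  (forall x, Icc a b x -> A / 2 <= w x <= A) -> (forall x, Icc a b x -> A / 2 <= v x <= A) ->
  forall x, Icc a b x -> w x <= v x.
Proof.
  intros Hab HM [Sw Ew] [Sv Ev] Ha Hb Bw Bv x Hx.
  enough (w x - v x <= 0) by lra. revert x Hx.
  apply (max_principle a b 0 _ _ _ Hab (C2_open_minus a b _ _ _ _ _ _ Sw Sv)); try lra.
  intros x Hx Hgt. assert (Hx' : Icc a b x) by (unfold Icc; lra).
  pose proof (Bw x Hx'); pose proof (Bv x Hx'); pose proof (Ew x Hx); pose proof (Ev x Hx).
  replace (w2 x - v2 x) with (M * (w x - v x) * (w x + v x - A)) by nra.
  apply Rmult_lt_0_compat; [apply Rmult_lt_0_compat|]; lra.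
Qed.

Lemma ode_sol_unique a b A M w w1 w2 v v1 v2 : a < b -> 0 < M ->
  ode_sol a b A M w w1 w2 -> ode_sol a b A M v v1 v2 -> w a = v a -> w b = v b ->
  (forall x, Icc a b x -> A / 2 <= w x <= A) -> (forall x, Icc a b x -> A / 2 <= v x <= A) ->
  forall x, Icc a b x -> w x = v x.
Proof.
  intros Hab HM Sw Sv Ha Hb Bw Bv x Hx. apply Rle_antisym.
  - exact (ode_sol_le a b A M w w1 w2 v v1 v2 Hab HM Sw Sv Ha Hb Bw Bv x Hx).
  - exact (ode_sol_le a b A M v v1 v2 w w1 w2 Hab HM Sv Sw (eq_sym Ha) (eq_sym Hb) Bv Bw x Hx).
Qed.

Lemma Icc_lt_of_convex_start a b d d1 d2 : a < b -> C2_open a b d d1 d2 ->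
  0 < d a -> 0 <= d1 a -> (forall x, a < x < b -> 0 <= d2 x) ->
  (forall x, a < x < b -> 0 < d x -> 0 < d2 x) -> d a < d b.
Proof.
  intros Hab [Dd [Cd Cd1]] Hda Hd1a Hd2 Hd2_pos.
  assert (Hd1_nonneg : forall x, a < x < b -> 0 <= d1 x).
  { intros x Hx. enough (d1 a <= d1 x) by lra.
    apply (Icc_le_of_nonneg_derive a x d1 d2); [lra|apply (cont_on_Icc_subset a b); auto; lra|].
    intros y Hy. split; [apply Dd|apply Hd2]; lra. }
  assert (Hd_pos : forall x, a < x < b -> 0 < d x).
  { intros x Hx. enough (d a <= d x) by lra.
    apply (Icc_le_of_nonneg_derive a x d d1); [lra|apply (cont_on_Icc_subset a b); auto; lra|].
    intros y Hy. split; [apply Dd|apply Hd1_nonneg]; lra. }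
  assert (Hd1_pos : forall x, a < x < b -> 0 < d1 x).
  { intros x Hx. enough (d1 a < d1 x) by lra.
    apply (Icc_lt_of_pos_derive a x d1 d2); [lra|apply (cont_on_Icc_subset a b); auto; lra|].
    intros y Hy. split; [apply Dd; lra|apply Hd2_pos, Hd_pos; lra]. }
  apply (Icc_lt_of_pos_derive a b d d1 Hab Cd).
  intros y Hy. split; [apply Dd; auto|apply Hd1_pos; auto].
Qed.

(* With [d = v - w]: [d >= 0] by the minimum principle, so [d'' = M d (v + w - A) >= 0];
   a slope [d'(a) >= 0] would then force [d(b) > d(a)], whereas [d(a) = d(b)]. *)
Lemma ode_sol_slope_decr a b A M nu1 nu2 w w1 w2 v v1 v2 :
  a < b -> 0 < A -> 0 < M -> nu1 < nu2 ->
  ode_sol a b A M w w1 w2 -> ode_sol a b A M v v1 v2 ->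
  w a = nu1 * A -> w b = nu1 * A -> v a = nu2 * A -> v b = nu2 * A ->
  (forall x, Icc a b x -> A / 2 <= w x <= A) -> (forall x, Icc a b x -> A / 2 <= v x <= A) ->
  v1 a < w1 a.
Proof.
  intros Hab HA HM Hnu [Sw Ew] [Sv Ev] Hwa Hwb Hva Hvb Bw Bv.
  pose proof (C2_open_minus a b _ _ _ _ _ _ Sv Sw) as Sd.
  set (d := fun x => v x - w x) in Sd. set (d1 := fun x => v1 x - w1 x) in Sd.
  set (d2 := fun x => v2 x - w2 x) in Sd.
  assert (Ed2 : forall x, a < x < b -> d2 x = M * d x * (v x + w x - A)).
  { intros x Hx. pose proof (Ev x Hx); pose proof (Ew x Hx). unfold d2, d. nra. }
  assert (Bx : forall x, a < x < b -> (A / 2 <= w x <= A) /\ (A / 2 <= v x <= A)).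
  { intros x Hx. split; [apply Bw|apply Bv]; unfold Icc; lra. }
  assert (Hdpos : 0 < (nu2 - nu1) * A) by (apply Rmult_lt_0_compat; lra).
  assert (Hd_nonneg : forall x, Icc a b x -> 0 <= d x).
  { apply (min_principle a b 0 d d1 d2 Hab Sd); unfold d; try lra.
    intros x Hx Hlt. rewrite Ed2 by auto. destruct (Bx x Hx). unfold d in *.
    assert (0 < M * (w x - v x) * (v x + w x - A))
      by (apply Rmult_lt_0_compat; [apply Rmult_lt_0_compat|]; lra).
    nra. }
  apply Rnot_le_lt. intro Hd1a.
  enough (d a < d b) by (unfold d in *; lra).
  apply (Icc_lt_of_convex_start a b d d1 d2 Hab Sd); unfold d1; try lra.
  - unfold d; lra.
  - intros x Hx. rewrite Ed2 by auto. destruct (Bx x Hx).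
    pose proof (Hd_nonneg x ltac:(unfold Icc; lra)).
    apply Rmult_le_pos; [apply Rmult_le_pos|]; lra.
  - intros x Hx Hdx. rewrite Ed2 by auto. destruct (Bx x Hx). unfold d in *.
    apply Rmult_lt_0_compat; [apply Rmult_lt_0_compat|]; lra.
Qed.

Lemma Icc_strict_incr_of_pos_derive p q f df :
  (forall t, p <= t <= q -> is_derive f t (df t) /\ 0 < df t) ->
  forall x y, p <= x -> x < y -> y <= q -> f x < f y.
Proof.
  intros H x y Hx Hxy Hy. apply (Icc_lt_of_pos_derive x y f df Hxy).
  - intros z Hz. apply (is_derive_cont_within _ f z (df z)). apply H. unfold Icc in Hz; lra.
  - intros z Hz. apply H. lra.
Qed.

Lemma strict_incr_Icc_inverse f p q : p < q -> cont_on (Icc p q) f ->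
  (forall x y, p <= x -> x < y -> y <= q -> f x < f y) ->
  exists G : R -> R,
    (forall y, f p <= y <= f q -> p <= G y <= q /\ f (G y) = y) /\
    (forall t, p <= t <= q -> G (f t) = t).
Proof.
  intros Hpq Hc Hinc.
  assert (Hfpq : f p < f q) by (apply Hinc; lra).
  set (G := fun y => epsilon (inhabits 0) (fun t => p <= t <= q /\ f t = y)).
  assert (HG : forall y, f p <= y <= f q -> p <= G y <= q /\ f (G y) = y).
  { intros y Hy. apply (epsilon_spec (inhabits 0) (fun t => p <= t <= q /\ f t = y)).
    destruct (IVT_Icc p q f y (Rlt_le _ _ Hpq) Hc) as [t [Ht E]];
      [rewrite Rmin_left, Rmax_right; lra|].
    exists t; auto. }
  exists G. split; auto.
  intros t Ht.
  assert (Hft : f p <= f t <= f q).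
  { split; [destruct (Req_dec p t) as [->|]|destruct (Req_dec t q) as [->|]];
      try lra; apply Rlt_le, Hinc; lra. }
  destruct (HG (f t) Hft) as [HGt E].
  destruct (Rtotal_order (G (f t)) t) as [Hlt|[Heq|Hgt]]; auto.
  - pose proof (Hinc (G (f t)) t ltac:(lra) Hlt ltac:(lra)). lra.
  - pose proof (Hinc t (G (f t)) ltac:(lra) Hgt ltac:(lra)). lra.
Qed.

Lemma inverse_of_pos_derive f df p q : p < q ->
  (forall t, p <= t <= q -> is_derive f t (df t) /\ 0 < df t) ->
  exists G : R -> R,
    (forall y, f p <= y <= f q -> p <= G y <= q /\ f (G y) = y) /\
    (forall t, p <= t <= q -> G (f t) = t) /\
    (forall y, f p < y < f q -> is_derive G y (/ df (G y))).
Proof.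
  intros Hpq Hd.
  pose proof (Icc_strict_incr_of_pos_derive p q f df Hd) as Hinc.
  destruct (strict_incr_Icc_inverse f p q Hpq) as [G [HG HGf]]; auto.
  { intros z Hz. apply (is_derive_cont_within _ f z (df z)), Hd. unfold Icc in Hz; lra. }
  exists G. split; auto. split; auto.
  intros y Hy.
  assert (Hfpq : f p < f q) by (apply Hinc; lra).
  assert (Hcomp : forall x, f p <= x <= f q -> comp f G x = id x)
    by (intros x Hx; apply HG; auto).
  assert (HcG : continuity_pt G y).
  { apply (continuity_pt_recip_interv f G p q Hpq Hinc); [| |intros a Ha|exact Hy].
    - intros; apply Hcomp; lra.
    - intros; apply HG; lra.
    - apply (is_derive_continuity_pt f a (df a)), Hd; auto. }
  assert (EGp : G (f p) = p) by (apply HGf; lra).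
  assert (EGq : G (f q) = q) by (apply HGf; lra).
  assert (Prf : forall a, G (f p) <= a <= G (f q) -> derivable_pt f a).
  { intros a Ha. rewrite EGp, EGq in Ha. exists (df a). apply is_derive_Reals, Hd; auto. }
  assert (HGy : G (f p) <= G y <= G (f q)) by (rewrite EGp, EGq; apply HG; lra).
  assert (Edf : derive_pt f (G y) (Prf (G y) HGy) = df (G y)).
  { apply derive_pt_eq_0, is_derive_Reals, Hd. rewrite <- EGp, <- EGq; auto. }
  assert (Hdf : 0 < df (G y)) by (apply Hd; rewrite <- EGp, <- EGq; auto).
  pose proof (derivable_pt_lim_recip_interv f G (f p) (f q) y Prf HcG Hfpq Hy HGy Hcomp
    ltac:(rewrite Edf; lra)) as Hlim.
  rewrite Edf in Hlim. apply is_derive_Reals.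
  replace (/ df (G y)) with (1 / df (G y)) by (field; lra). exact Hlim.
Qed.

Lemma is_derive_comp_R (h G : R -> R) x dh dG : is_derive h (G x) dh -> is_derive G x dG ->
  is_derive (fun x => h (G x)) x (dh * dG).
Proof.
  intros H1 H2. pose proof (is_derive_comp h G x dh dG H1 H2) as H.
  unfold scal in H; simpl in H; unfold mult in H; simpl in H. rewrite Rmult_comm. exact H.
Qed.

Lemma is_derive_eq_val (f : R -> R) x l l' : is_derive f x l -> l = l' -> is_derive f x l'.
Proof. intros H E; subst; auto. Qed.

Lemma square_lt_locally t C : t * t < C ->
  exists eps, 0 < eps /\ forall s, Rabs (s - t) < eps -> s * s < C.
Proof.
  intros H. pose proof (Rabs_pos t).
  assert (Hp : 0 < (C - t * t) / (2 * Rabs t + 2)) by (apply Rdiv_lt_0_compat; lra).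
  exists (Rmin 1 ((C - t * t) / (2 * Rabs t + 2))). split; [apply Rmin_pos; lra|].
  intros s Hs.
  assert (H1 := Rlt_le_trans _ _ _ Hs (Rmin_l _ _)).
  assert (H2 := Rlt_le_trans _ _ _ Hs (Rmin_r _ _)).
  assert (H3 : Rabs (s - t) * (2 * Rabs t + 2) < C - t * t).
  { apply Rmult_lt_reg_r with (/ (2 * Rabs t + 2)); [apply Rinv_0_lt_compat; lra|].
    replace (Rabs (s - t) * (2 * Rabs t + 2) * / (2 * Rabs t + 2)) with (Rabs (s - t))
      by (field; lra).
    exact H2. }
  set (h := s - t) in *. replace s with (t + h) by (unfold h; ring).
  assert (Hhh : h * h = Rabs h * Rabs h)
    by (rewrite <- Rabs_mult, Rabs_right; [auto|nra]).
  assert (t * h <= Rabs t * Rabs h) by (rewrite <- Rabs_mult; apply Rle_abs).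
  pose proof (Rabs_pos h). nra.
Qed.

Definition pot u := u * u / 2 - u * u * u / 3.

(* By [pot_quot_spec], substituting [u = m - t^2] in the energy identity
   [u'^2 / 2 = pot m - pot u] of [u'' = u^2 - u] (with [u(0) = m], [u'(0) = 0])
   turns it into [t' = speed m t]; hence [t] is the inverse of [time_map m]. *)
Definition pot_quot m t := m - m * m - t * t / 2 + m * t * t - t * t * t * t / 3.
Definition speed m t := sqrt (pot_quot m t / 2).
Definition pace m t := / speed m t.
Definition time_map m t := RInt (pace m) 0 t.
Definition pace_dom m t := t * t < 3 * m - 3 / 2.

Lemma pot_quot_spec m t : t * t * pot_quot m t = pot m - pot (m - t * t).
Proof. unfold pot_quot, pot; field. Qed.

Lemma speed_even m t : speed m (- t) = speed m t.
Proof.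
  unfold speed. replace (pot_quot m (- t)) with (pot_quot m t) by (unfold pot_quot; field).
  reflexivity.
Qed.

Lemma pace_even m t : pace m (- t) = pace m t.
Proof. unfold pace. rewrite speed_even. reflexivity. Qed.

Lemma pot_quot_lb m t : 1/2 < m < 1 -> t * t <= 3 * m - 3 / 2 -> m * (1 - m) <= pot_quot m t.
Proof. intros. unfold pot_quot. nra. Qed.

Lemma pot_quot_pos m t : 1/2 < m < 1 -> t * t <= 3 * m - 3 / 2 -> 0 < pot_quot m t.
Proof. intros Hm Ht. pose proof (pot_quot_lb m t Hm Ht). nra. Qed.

Lemma speed_pos m t : 1/2 < m < 1 -> t * t <= 3 * m - 3 / 2 -> 0 < speed m t.
Proof. intros Hm Ht. apply sqrt_lt_R0. pose proof (pot_quot_pos m t Hm Ht). lra. Qed.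

Lemma speed_sqr m t : 1/2 < m < 1 -> t * t <= 3 * m - 3 / 2 ->
  speed m t * speed m t = pot_quot m t / 2.
Proof. intros Hm Ht. apply sqrt_sqrt. pose proof (pot_quot_pos m t Hm Ht). lra. Qed.

Lemma speed_le_half m t : 1/2 < m < 1 -> t * t <= 1/2 -> speed m t <= 1/2.
Proof.
  intros Hm Ht. unfold speed. rewrite <- (sqrt_square (1/2)) by lra.
  destruct (Rle_dec 0 (pot_quot m t / 2)).
  - apply sqrt_le_1; try lra. unfold pot_quot. nra.
  - rewrite sqrt_neg_0 by lra. apply sqrt_pos.
Qed.

Lemma Rabs_pace_le m t c0 : 0 < c0 -> c0 <= pot_quot m t -> Rabs (pace m t) <= / sqrt (c0 / 2).
Proof.
  intros Hc0 Hg.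
  assert (Hs : 0 < sqrt (c0 / 2)) by (apply sqrt_lt_R0; lra).
  assert (sqrt (c0 / 2) <= speed m t) by (apply sqrt_le_1_alt; lra).
  unfold pace. rewrite Rabs_right by (apply Rle_ge, Rlt_le, Rinv_0_lt_compat; lra).
  apply Rinv_le_contravar; auto.
Qed.

Lemma pace_dom_0 m : 1/2 < m -> pace_dom m 0.
Proof. unfold pace_dom; lra. Qed.

Lemma pace_dom_between m s1 s2 z : pace_dom m s1 -> pace_dom m s2 ->
  Rmin s1 s2 <= z <= Rmax s1 s2 -> pace_dom m z.
Proof.
  unfold pace_dom, Rmin, Rmax; intros H1 H2 H.
  destruct (Rle_dec s1 s2); destruct (Rle_dec 0 z); nra.
Qed.

Lemma pace_continuous m z : 1/2 < m < 1 -> pace_dom m z -> continuous (pace m) z.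
Proof.
  intros Hm Hz. unfold pace_dom in Hz.
  pose proof (pot_quot_pos m z Hm ltac:(lra)) as Hg.
  apply (ex_derive_continuous (pace m) z). unfold pace, speed, pot_quot in *. auto_derive.
  repeat split; try lra. apply Rgt_not_eq, sqrt_lt_R0; lra.
Qed.

Lemma ex_RInt_pace m s1 s2 : 1/2 < m < 1 -> pace_dom m s1 -> pace_dom m s2 -> ex_RInt (pace m) s1 s2.
Proof.
  intros Hm H1 H2. apply (@ex_RInt_continuous R_CompleteNormedModule). intros z Hz.
  apply pace_continuous; auto. apply (pace_dom_between m s1 s2); auto.
Qed.

Lemma time_map_derive m t : 1/2 < m < 1 -> pace_dom m t -> is_derive (time_map m) t (pace m t).
Proof.
  intros Hm Ht. apply (@is_derive_RInt R_CompleteNormedModule (pace m) (RInt (pace m) 0) 0 t).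
  - destruct (square_lt_locally t (3 * m - 3/2) Ht) as [eps [He H]].
    exists (mkposreal eps He). intros s Hs. apply RInt_correct.
    apply ex_RInt_pace; auto; [apply pace_dom_0; lra|apply H, Hs].
  - apply pace_continuous; auto.
Qed.

Lemma time_map_0 m : time_map m 0 = 0.
Proof. unfold time_map. rewrite RInt_point. reflexivity. Qed.

Lemma time_map_odd m t : 1/2 < m < 1 -> pace_dom m t -> time_map m (- t) = - time_map m t.
Proof.
  intros Hm Ht. unfold time_map.
  assert (Hex : ex_RInt (pace m) 0 t) by (apply ex_RInt_pace; auto; apply pace_dom_0; lra).
  assert (Hex' : ex_RInt (pace m) (-1 * 0 + 0) (-1 * t + 0)).
  { replace (-1 * 0 + 0) with 0 by ring. replace (-1 * t + 0) with (- t) by ring.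
    apply ex_RInt_pace; auto; [apply pace_dom_0; lra|unfold pace_dom in *; nra]. }
  pose proof (RInt_comp_lin (pace m) (-1) 0 0 t Hex') as E.
  replace (-1 * 0 + 0) with 0 in E by ring. replace (-1 * t + 0) with (- t) in E by ring.
  rewrite <- E, (RInt_ext _ (fun y => opp (pace m y))).
  - apply (@RInt_opp R_CompleteNormedModule (pace m) 0 t Hex).
  - intros x _. unfold scal; simpl; unfold mult; simpl.
    replace (-1 * x + 0) with (- x) by ring. rewrite pace_even. unfold opp; simpl. ring.
Qed.

Lemma time_map_strict_incr m s t : 1/2 < m < 1 -> pace_dom m s -> pace_dom m t -> s < t ->
  time_map m s < time_map m t.
Proof.
  intros Hm Hs Ht Hst. apply (Icc_strict_incr_of_pos_derive s t _ (pace m)); try lra.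
  intros z Hz. assert (Hz' : pace_dom m z)
    by (apply (pace_dom_between m s t); auto; rewrite Rmin_left, Rmax_right; lra).
  split; [apply time_map_derive; auto|].
  apply Rinv_0_lt_compat, speed_pos; unfold pace_dom in Hz'; lra.
Qed.

Lemma time_map_lt_rev m s t : 1/2 < m < 1 -> pace_dom m s -> pace_dom m t ->
  time_map m s < time_map m t -> s < t.
Proof.
  intros Hm Hs Ht H. apply Rnot_le_lt; intro Hle.
  destruct (Req_dec s t) as [->|Hne]; [lra|].
  pose proof (time_map_strict_incr m t s Hm Ht Hs ltac:(lra)). lra.
Qed.

Lemma time_map_le_rev m s t : 1/2 < m < 1 -> pace_dom m s -> pace_dom m t ->
  time_map m s <= time_map m t -> s <= t.
Proof.
  intros Hm Hs Ht H. apply Rnot_lt_le; intro Hlt.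
  pose proof (time_map_strict_incr m t s Hm Ht Hs Hlt). lra.
Qed.

Lemma time_map_inverse m c : 1/2 < m < 1 -> 0 < c -> pace_dom m c ->
  exists tau : R -> R,
    (forall x, - time_map m c <= x <= time_map m c ->
       - c <= tau x <= c /\ time_map m (tau x) = x) /\
    (forall t, - c <= t <= c -> tau (time_map m t) = t) /\
    (forall x, - time_map m c < x < time_map m c -> is_derive tau x (speed m (tau x))).
Proof.
  intros Hm Hc Hdc.
  assert (Hdt : forall t, - c <= t <= c -> pace_dom m t).
  { intros t Ht. apply (pace_dom_between m (- c) c); [unfold pace_dom in *; nra|auto|].
    rewrite Rmin_left, Rmax_right; lra. }
  destruct (inverse_of_pos_derive (time_map m) (pace m) (- c) c) as [tau [H1 [H2 H3]]]; [lra| |].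
  { intros t Ht. pose proof (Hdt t Ht). split; [apply time_map_derive; auto|].
    apply Rinv_0_lt_compat, speed_pos; unfold pace_dom in *; lra. }
  rewrite time_map_odd in H1, H3 by auto.
  exists tau. split; [|split]; auto.
  intros x Hx. specialize (H3 x Hx). unfold pace in H3. rewrite Rinv_inv in H3. exact H3.
Qed.

Lemma is_derive_slope_profile m t : 0 < pot_quot m t ->
  is_derive (fun t => -2 * t * speed m t) t
    (((m - t * t) * (m - t * t) - (m - t * t)) / speed m t).
Proof.
  intros Hg. unfold speed.
  assert (Hq : 0 < sqrt (pot_quot m t / 2)) by (apply sqrt_lt_R0; lra).
  assert (Hqq : sqrt (pot_quot m t / 2) * sqrt (pot_quot m t / 2) = pot_quot m t / 2)
    by (apply sqrt_sqrt; lra).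
  revert Hq Hqq. set (q := sqrt (pot_quot m t / 2)). intros Hq Hqq.
  unfold pot_quot in *. auto_derive; [lra|].
  change (sqrt ((m - m * m + - (t * t * / 2) + m * t * t + - (t * t * t * t * / 3)) * / 2))
    with q.
  apply (Rmult_eq_reg_r q); [|lra]. field_simplify; [|lra|lra].
  replace (q ^ 2) with (q * q) by ring. rewrite Hqq. field.
Qed.

Lemma is_derive_profile m tau x : 1/2 < m < 1 -> pace_dom m (tau x) ->
  is_derive tau x (speed m (tau x)) ->
  is_derive (fun x => m - tau x * tau x) x (-2 * tau x * speed m (tau x)) /\
  is_derive (fun x => -2 * tau x * speed m (tau x)) x
    ((m - tau x * tau x) * (m - tau x * tau x) - (m - tau x * tau x)).
Proof.
  intros Hm Hdom Hd. unfold pace_dom in Hdom.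
  assert (Hg : 0 < pot_quot m (tau x)) by (apply pot_quot_pos; auto; lra).
  assert (Hs : 0 < speed m (tau x)) by (apply sqrt_lt_R0; lra).
  split.
  - assert (Hsq : is_derive (fun t => m - t * t) (tau x) (-2 * tau x))
      by (auto_derive; [auto|ring]).
    exact (is_derive_comp_R _ tau x _ _ Hsq Hd).
  - apply (is_derive_eq_val _ _ _ _ (is_derive_comp_R (fun t => -2 * t * speed m t) tau x _ _
      (is_derive_slope_profile m (tau x) Hg) Hd)).
    change (((m - tau x * tau x) * (m - tau x * tau x) - (m - tau x * tau x)) / speed m (tau x)
      * speed m (tau x) = (m - tau x * tau x) * (m - tau x * tau x) - (m - tau x * tau x)).
    field. lra.
Qed.

Definition half_length nu m := time_map m (sqrt (m - nu)).
Definition edge_slope nu m := 2 * sqrt (m - nu) * speed m (sqrt (m - nu)).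

Lemma normalized_solution nu m : 1/2 <= nu < m -> m < 1 ->
  exists u u1 u2 : R -> R,
    (forall x, Icc (- half_length nu m) (half_length nu m) x ->
       is_derive u x (u1 x) /\ is_derive u1 x (u2 x) /\ u2 x = u x * u x - u x) /\
    u (- half_length nu m) = nu /\ u (half_length nu m) = nu /\ u 0 = m /\
    u1 (- half_length nu m) = edge_slope nu m /\
    (forall x, Icc (- half_length nu m) (half_length nu m) x -> nu <= u x <= m) /\
    (forall x, - half_length nu m < x < half_length nu m -> nu < u x).
Proof.
  intros Hnu Hm1. assert (Hm : 1/2 < m < 1) by lra.
  set (c := sqrt (2 * m - 1)).
  assert (Hc2 : c * c = 2 * m - 1) by (apply sqrt_sqrt; lra).
  assert (Hc : 0 < c) by (apply sqrt_lt_R0; lra).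
  set (a := sqrt (m - nu)).
  assert (Ha2 : a * a = m - nu) by (apply sqrt_sqrt; lra).
  assert (Ha : 0 < a) by (apply sqrt_lt_R0; lra).
  assert (Hac : a < c) by nra.
  assert (Hdt : forall t, - c <= t <= c -> pace_dom m t) by (unfold pace_dom; intros; nra).
  set (X := time_map m).
  assert (EXa : X (- a) = - X a) by (apply time_map_odd; auto; apply Hdt; lra).
  assert (HXac : X a < X c) by (apply time_map_strict_incr; auto; apply Hdt; lra).
  assert (HXa : 0 < X a).
  { rewrite <- (time_map_0 m). apply time_map_strict_incr; auto; apply Hdt; lra. }
  destruct (time_map_inverse m c Hm Hc (Hdt c ltac:(lra))) as [tau [Hrange [Htau Hdtau]]].
  fold X in Hrange, Htau, Hdtau.
  unfold half_length, edge_slope; fold a; fold X.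
  assert (Htau_a : tau (X a) = a) by (apply Htau; lra).
  assert (Htau_ma : tau (- X a) = - a) by (rewrite <- EXa; apply Htau; lra).
  assert (Htau_0 : tau 0 = 0).
  { pose proof (Htau 0 ltac:(lra)) as E. unfold X in E. rewrite time_map_0 in E. exact E. }
  exists (fun x => m - tau x * tau x), (fun x => -2 * tau x * speed m (tau x)),
    (fun x => (m - tau x * tau x) * (m - tau x * tau x) - (m - tau x * tau x)).
  split; [|split; [|split; [|split; [|split; [|split]]]]].
  - intros x Hx. unfold Icc in Hx. destruct (Hrange x ltac:(lra)) as [Hr _].
    destruct (is_derive_profile m tau x Hm (Hdt _ Hr) (Hdtau x ltac:(lra))).
    split; [|split]; auto.
  - rewrite Htau_ma. lra.
  - rewrite Htau_a. lra.
  - rewrite Htau_0. ring.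
  - rewrite Htau_ma, speed_even. ring.
  - intros x Hx. unfold Icc in Hx. destruct (Hrange x ltac:(lra)) as [Hr Hx2].
    assert (- a <= tau x)
      by (apply (time_map_le_rev m); try apply Hdt; try lra; fold X; rewrite EXa, Hx2; lra).
    assert (tau x <= a)
      by (apply (time_map_le_rev m); try apply Hdt; try lra; fold X; rewrite Hx2; lra).
    split; nra.
  - intros x Hx. destruct (Hrange x ltac:(lra)) as [Hr Hx2].
    assert (- a < tau x)
      by (apply (time_map_lt_rev m); try apply Hdt; try lra; fold X; rewrite EXa, Hx2; lra).
    assert (tau x < a)
      by (apply (time_map_lt_rev m); try apply Hdt; try lra; fold X; rewrite Hx2; lra).
    nra.
Qed.

Lemma ode_sol_of_is_derive a b A M u u1 u2 :
  (forall x, Icc a b x -> is_derive u x (u1 x) /\ is_derive u1 x (u2 x) /\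
     - u2 x = M * (A - u x) * u x) ->
  ode_sol a b A M u u1 u2.
Proof.
  intros H. split; [split; [|split]|].
  - intros x Hx. destruct (H x ltac:(unfold Icc; lra)) as [? [? _]]; auto.
  - intros x Hx. apply (is_derive_cont_within _ u x (u1 x)), H, Hx.
  - intros x Hx. apply (is_derive_cont_within _ u1 x (u2 x)), H, Hx.
  - intros x Hx. apply H. unfold Icc; lra.
Qed.

Lemma normalized_ode_sol nu m : 1/2 <= nu < m -> m < 1 ->
  exists u u1 u2 : R -> R,
    ode_sol (- half_length nu m) (half_length nu m) 1 1 u u1 u2 /\
    u (- half_length nu m) = nu /\ u (half_length nu m) = nu /\ u 0 = m /\
    u1 (- half_length nu m) = edge_slope nu m /\
    (forall x, Icc (- half_length nu m) (half_length nu m) x -> nu <= u x <= m).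
Proof.
  intros Hnu Hm.
  destruct (normalized_solution nu m Hnu Hm) as [u [u1 [u2 [Hd [E1 [E2 [E3 [E4 [B _]]]]]]]]].
  exists u, u1, u2. split; [|auto].
  apply ode_sol_of_is_derive. intros x Hx. destruct (Hd x Hx) as [D1 [D2 E]].
  split; [|split]; auto. rewrite E; ring.
Qed.

Lemma sqrt_diff_le x y : 0 <= x -> 0 <= y -> Rabs (sqrt x - sqrt y) <= sqrt (Rabs (x - y)).
Proof.
  intros Hx Hy.
  assert (Hle : forall p q, 0 <= q <= p -> Rabs (sqrt p - sqrt q) <= sqrt (Rabs (p - q))).
  { clear. intros p q [Hq Hpq].
    assert (Hs : sqrt q <= sqrt p) by (apply sqrt_le_1_alt; lra).
    pose proof (sqrt_pos q). pose proof (sqrt_sqrt p ltac:(lra)). pose proof (sqrt_sqrt q Hq).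
    rewrite !Rabs_right by lra.
    rewrite <- (sqrt_square (sqrt p - sqrt q)) by lra.
    apply sqrt_le_1_alt. nra. } destruct (Rle_dec y x); [apply Hle; lra|].
  rewrite Rabs_minus_sym, (Rabs_minus_sym x). apply Hle; lra.
Qed.

Lemma Rabs_RInt_le_const f a b K : ex_RInt f a b ->
  (forall x, Rmin a b <= x <= Rmax a b -> Rabs (f x) <= K) ->
  Rabs (RInt f a b) <= Rabs (b - a) * K.
Proof.
  intros Hex H. apply (@norm_RInt_le_const_abs R_NormedModule f a b); auto.
  apply (@RInt_correct R_CompleteNormedModule). exact Hex.
Qed.

Section HalfLengthBounds.

Variables nu m : R.
Hypothesis Hnu : 1/2 <= nu < m.
Hypothesis Hm : m < 1.

Let a := sqrt (m - nu).

Let a_sqr : a * a = m - nu.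
Proof. apply sqrt_sqrt; lra. Qed.

Let a_pos : 0 < a.
Proof. apply sqrt_lt_R0; lra. Qed.

Let t_range_facts t : 0 <= t <= a -> pace_dom m t /\ t * t <= 3 * m - 3/2 /\ t * t <= 1/2.
Proof. intros Ht. pose proof a_sqr. pose proof a_pos. unfold pace_dom. repeat split; nra. Qed.

Let ex_RInt_pace_0a : ex_RInt (pace m) 0 a.
Proof. apply ex_RInt_pace; [lra|apply pace_dom_0; lra|apply t_range_facts; pose proof a_pos; lra]. Qed.

Lemma half_length_ge : 2 * sqrt (m - nu) <= half_length nu m.
Proof.
  unfold half_length, time_map; fold a. pose proof a_pos.
  pose proof (RInt_le (fun _ => 2) (pace m) 0 a ltac:(lra) (ex_RInt_const _ _ _)
    ex_RInt_pace_0a) as HR.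
  rewrite RInt_const in HR. unfold scal in HR; simpl in HR; unfold mult in HR; simpl in HR.
  replace (2 * a) with ((a - 0) * 2) by ring. apply HR.
  intros t Ht. destruct (t_range_facts t ltac:(lra)) as [_ [Hg Ht2]].
  pose proof (speed_pos m t ltac:(lra) Hg). pose proof (speed_le_half m t ltac:(lra) Ht2).
  unfold pace. apply (Rmult_le_reg_r (speed m t)); auto. rewrite Rinv_l; lra.
Qed.

Lemma half_length_pos : 0 < half_length nu m.
Proof. pose proof half_length_ge. pose proof (sqrt_lt_R0 (m - nu) ltac:(lra)). lra. Qed.

Lemma half_length_le : half_length nu m <= sqrt (m - nu) / sqrt (m * (1 - m) / 2).
Proof.
  unfold half_length, time_map; fold a. pose proof a_pos.
  pose proof (Rabs_RInt_le_const (pace m) 0 a (/ sqrt (m * (1 - m) / 2)) ex_RInt_pace_0a) as HR.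
  replace (Rabs (a - 0)) with a in HR by (rewrite Rminus_0_r, Rabs_right; lra).
  eapply Rle_trans; [apply Rle_abs|]. apply HR.
  intros t Ht. rewrite Rmin_left, Rmax_right in Ht by lra.
  destruct (t_range_facts t Ht) as [_ [Hg _]].
  apply Rabs_pace_le; [nra|apply pot_quot_lb; auto; lra].
Qed.

Lemma edge_slope_eq : edge_slope nu m = sqrt (2 * (pot m - pot nu)).
Proof.
  unfold edge_slope; fold a. pose proof a_sqr. pose proof a_pos.
  destruct (t_range_facts a ltac:(lra)) as [_ [Hg _]].
  pose proof (speed_pos m a ltac:(lra) Hg).
  rewrite <- (sqrt_square (2 * a * speed m a)) by nra. f_equal.
  replace (2 * a * speed m a * (2 * a * speed m a))
    with (4 * (a * a) * (speed m a * speed m a)) by ring.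
  rewrite speed_sqr by (auto; lra).
  pose proof (pot_quot_spec m a). replace nu with (m - a * a) by lra. lra.
Qed.

Lemma edge_slope_pos : 0 < edge_slope nu m.
Proof.
  unfold edge_slope; fold a. pose proof a_pos.
  destruct (t_range_facts a ltac:(lra)) as [_ [Hg _]].
  pose proof (speed_pos m a ltac:(lra) Hg). apply Rmult_lt_0_compat; lra.
Qed.

Lemma edge_slope_le : edge_slope nu m <= sqrt (m - nu).
Proof.
  unfold edge_slope; fold a. pose proof a_pos.
  destruct (t_range_facts a ltac:(lra)) as [_ [_ Ha]].
  pose proof (speed_le_half m a ltac:(lra) Ha). nra.
Qed.

End HalfLengthBounds.

Lemma pace_diff_le m m0 t c0 : 0 < c0 -> c0 <= pot_quot m t -> c0 <= pot_quot m0 t ->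
  Rabs (1 - m - m0 + t * t) <= 2 ->
  Rabs (pace m t - pace m0 t) <= 2 / c0 * sqrt (Rabs (m - m0)).
Proof.
  intros Hc0 Hg Hg0 Hb.
  assert (Hr : sqrt (c0 / 2) <= speed m t) by (apply sqrt_le_1_alt; lra).
  assert (Hr0 : sqrt (c0 / 2) <= speed m0 t) by (apply sqrt_le_1_alt; lra).
  assert (Hrr : c0 / 2 <= speed m t * speed m0 t).
  { pose proof (sqrt_sqrt (c0 / 2) ltac:(lra)). pose proof (sqrt_pos (c0 / 2)). nra. }
  assert (Hdiff : Rabs (speed m0 t - speed m t) <= sqrt (Rabs (m - m0))).
  { rewrite Rabs_minus_sym. unfold speed.
    eapply Rle_trans; [apply sqrt_diff_le; lra|]. apply sqrt_le_1_alt.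
    replace (pot_quot m t / 2 - pot_quot m0 t / 2)
      with ((m - m0) * ((1 - m - m0 + t * t) / 2)) by (unfold pot_quot; field).
    rewrite Rabs_mult, Rabs_div, (Rabs_right 2) by lra.
    pose proof (Rabs_pos (m - m0)). nra. }
  pose proof (sqrt_pos (Rabs (m - m0))).
  unfold pace.
  replace (/ speed m t - / speed m0 t) with ((speed m0 t - speed m t) / (speed m t * speed m0 t))
    by (field; pose proof (sqrt_pos (c0 / 2)); split; apply Rgt_not_eq; nra).
  rewrite Rabs_div, (Rabs_right (speed m t * speed m0 t)) by nra.
  apply (Rmult_le_reg_r (speed m t * speed m0 t)); [nra|].
  unfold Rdiv. rewrite Rmult_assoc, Rinv_l, Rmult_1_r by nra.
  apply Rle_trans with (2 / c0 * sqrt (Rabs (m - m0)) * (c0 / 2)).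
  - replace (2 / c0 * sqrt (Rabs (m - m0)) * (c0 / 2)) with (sqrt (Rabs (m - m0)))
      by (field; lra). lra.
  - apply Rmult_le_compat_l; [|lra]. apply Rmult_le_pos; [|lra].
    left; apply Rdiv_lt_0_compat; lra.
Qed.

Lemma Rabs_RInt_shift_le f g a0 a K C : ex_RInt f 0 a0 -> ex_RInt f a0 a -> ex_RInt g 0 a0 ->
  (forall x, Rmin a0 a <= x <= Rmax a0 a -> Rabs (f x) <= K) ->
  (forall x, Rmin 0 a0 <= x <= Rmax 0 a0 -> Rabs (f x - g x) <= C) ->
  Rabs (RInt f 0 a - RInt g 0 a0) <= Rabs (a - a0) * K + Rabs a0 * C.
Proof.
  intros Ex1 Ex2 Ex3 HK HC.
  rewrite <- (@RInt_Chasles R_CompleteNormedModule f 0 a0 a Ex1 Ex2).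
  replace (plus (RInt f 0 a0) (RInt f a0 a) - RInt g 0 a0)
    with (RInt f a0 a + (RInt f 0 a0 - RInt g 0 a0)) by (unfold plus; simpl; ring).
  replace (RInt f 0 a0 - RInt g 0 a0) with (RInt (fun x => f x - g x) 0 a0)
    by exact (@RInt_minus R_CompleteNormedModule _ _ _ _ Ex1 Ex3).
  eapply Rle_trans; [apply Rabs_triang|]. apply Rplus_le_compat.
  - apply Rabs_RInt_le_const; auto.
  - replace (Rabs a0) with (Rabs (a0 - 0)) by (rewrite Rminus_0_r; auto).
    apply Rabs_RInt_le_const; auto. apply (@ex_RInt_minus R_NormedModule); auto.
Qed.

Lemma pot_quot_near m0 nu eta m t : 1/2 <= nu -> 0 < eta -> eta <= (1 - m0) / 2 ->
  eta <= (2 * m0 - 1) / 8 -> m0 - eta <= m <= m0 + eta -> t * t <= m0 + eta - nu ->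
  (m0 - eta) * (1 - m0 - eta) <= pot_quot m t /\ pace_dom m t /\ Rabs (1 - m - m0 + t * t) <= 2.
Proof.
  intros Hnu Heta H1 H2 Hm Ht.
  pose proof (pot_quot_lb m t ltac:(lra) ltac:(lra)).
  assert ((m0 - eta) * (1 - m0 - eta) <= m * (1 - m)) by (apply Rmult_le_compat; lra).
  unfold pace_dom. split; [lra|split; [lra|apply Rabs_le; nra]].
Qed.

(* Near [m0], [pot_quot] stays above [c0 > 0] on the relevant [t]-range, so [pace]
   is uniformly bounded and [1/2]-Hoelder in [m] there. *)
Lemma half_length_hoelder nu m0 : 1/2 <= nu < m0 -> m0 < 1 ->
  exists eta C, 0 < eta /\ 0 < C /\ forall m, Rabs (m - m0) < eta ->
    nu < m < 1 /\ Rabs (half_length nu m - half_length nu m0) <= C * sqrt (Rabs (m - m0)).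
Proof.
  intros Hnu Hm0.
  set (eta := Rmin ((m0 - nu) / 2) (Rmin ((1 - m0) / 2) ((2 * m0 - 1) / 8))).
  assert (Heta : 0 < eta /\ eta <= (m0 - nu) / 2 /\ eta <= (1 - m0) / 2 /\ eta <= (2 * m0 - 1) / 8).
  { unfold eta, Rmin; repeat destruct Rle_dec; lra. }
  set (c0 := (m0 - eta) * (1 - m0 - eta)).
  assert (Hc0 : 0 < c0) by (unfold c0; apply Rmult_lt_0_compat; lra).
  assert (Hsc : 0 < sqrt (c0 / 2)) by (apply sqrt_lt_R0; lra).
  set (K := / sqrt (c0 / 2)).
  assert (HK : 0 < K) by (apply Rinv_0_lt_compat; auto).
  assert (H2c0 : 0 < 2 / c0) by (apply Rdiv_lt_0_compat; lra).
  exists eta, (K + 2 / c0). split; [lra|split; [lra|]].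
  intros m Hm. apply Rabs_def2 in Hm. split; [lra|].
  set (reg := fun t => t * t <= m0 + eta - nu).
  assert (Hreg : forall m', m0 - eta <= m' <= m0 + eta -> forall t, reg t ->
    c0 <= pot_quot m' t /\ pace_dom m' t /\ Rabs (1 - m' - m0 + t * t) <= 2)
    by (intros; apply (pot_quot_near m0 nu eta); unfold reg in *; lra).
  set (a := sqrt (m - nu)). set (a0 := sqrt (m0 - nu)).
  assert (Ha : a * a = m - nu) by (apply sqrt_sqrt; lra).
  assert (Ha0 : a0 * a0 = m0 - nu) by (apply sqrt_sqrt; lra).
  pose proof (sqrt_pos (m - nu)) as Hap. pose proof (sqrt_pos (m0 - nu)) as Ha0p.
  fold a a0 in Hap, Ha0p.
  assert (Hreg_a : forall t, Rmin a0 a <= t <= Rmax a0 a -> reg t).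
  { intros t Ht. unfold reg, Rmin, Rmax in *. repeat destruct Rle_dec; nra. }
  assert (Hreg_a0 : forall t, Rmin 0 a0 <= t <= Rmax 0 a0 -> reg t).
  { intros t Ht. unfold reg, Rmin, Rmax in *. repeat destruct Rle_dec; nra. }
  assert (Hreg_0 : reg 0 /\ reg a0 /\ reg a) by (unfold reg; repeat split; nra).
  assert (Hex : forall m' s1 s2, m0 - eta <= m' <= m0 + eta -> reg s1 -> reg s2 ->
    ex_RInt (pace m') s1 s2) by (intros; apply ex_RInt_pace; [lra|apply Hreg..]; auto).
  unfold half_length, time_map. fold a a0.
  eapply Rle_trans; [apply Rabs_RInt_shift_le with (K := K) (C := 2 / c0 * sqrt (Rabs (m - m0)))|].
  - apply Hex; [lra|apply Hreg_0..].
  - apply Hex; [lra|apply Hreg_0..].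
  - apply Hex; [lra|apply Hreg_0..].
  - intros t Ht. apply Rabs_pace_le; auto. apply (Hreg m ltac:(lra) t (Hreg_a t Ht)).
  - intros t Ht. destruct (Hreg m ltac:(lra) t (Hreg_a0 t Ht)) as [Hg [_ Hb]].
    destruct (Hreg m0 ltac:(lra) t (Hreg_a0 t Ht)) as [Hg0 _].
    apply pace_diff_le; auto.
  - assert (B3 : Rabs (a - a0) <= sqrt (Rabs (m - m0))).
    { unfold a, a0. eapply Rle_trans; [apply sqrt_diff_le; lra|].
      right. f_equal. f_equal. ring. }
    assert (B4 : Rabs a0 <= 1) by (rewrite Rabs_right; nra).
    pose proof (sqrt_pos (Rabs (m - m0))).
    assert (Rabs (a - a0) * K <= sqrt (Rabs (m - m0)) * K) by (apply Rmult_le_compat_r; lra).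
    assert (Rabs a0 * (2 / c0 * sqrt (Rabs (m - m0))) <= 1 * (2 / c0 * sqrt (Rabs (m - m0))))
      by (apply Rmult_le_compat_r; [apply Rmult_le_pos|]; lra).
    lra.
Qed.

Lemma half_length_cont_on nu p q : 1/2 <= nu < p -> q < 1 -> cont_on (Icc p q) (half_length nu).
Proof.
  intros Hnu Hq x Hx eps Heps. unfold Icc in Hx.
  destruct (half_length_hoelder nu x ltac:(lra) ltac:(lra)) as [eta [C [Heta [HC H]]]].
  set (e := eps / (C + 1)).
  assert (He : 0 < e) by (apply Rdiv_lt_0_compat; lra).
  exists (Rmin eta (e * e)). split; [apply Rmin_pos; nra|].
  intros y _ Hy.
  destruct (H y (Rlt_le_trans _ _ _ Hy (Rmin_l _ _))) as [_ Hb].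
  assert (Hs : sqrt (Rabs (y - x)) < e).
  { rewrite <- (sqrt_square e) by lra. apply sqrt_lt_1_alt.
    split; [apply Rabs_pos|exact (Rlt_le_trans _ _ _ Hy (Rmin_r _ _))]. }
  assert (HCe : C * e < eps).
  { unfold e. apply (Rmult_lt_reg_r (C + 1)); [lra|].
    replace (C * (eps / (C + 1)) * (C + 1)) with (C * eps) by (field; lra). nra. }
  pose proof (sqrt_pos (Rabs (y - x))). nra.
Qed.

Lemma half_length_cont_nu nu0 m : 1/2 <= nu0 < m -> m < 1 ->
  forall eps, 0 < eps -> exists delta, 0 < delta /\ forall nu, 1/2 <= nu < m ->
    Rabs (nu - nu0) < delta -> Rabs (half_length nu m - half_length nu0 m) < eps.
Proof.
  intros Hnu Hm eps Heps.
  assert (Hc : continuity_pt (fun nu => time_map m (sqrt (m - nu))) nu0).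
  { apply (continuity_pt_comp (fun nu => sqrt (m - nu)) (time_map m)).
    - apply (continuity_pt_comp (fun nu => m - nu) sqrt).
      + apply continuity_pt_minus; [apply continuity_pt_const; intros ? ?; auto|].
        apply derivable_continuous_pt, derivable_pt_id.
      + apply continuity_pt_sqrt. lra.
    - apply (is_derive_continuity_pt _ _ (pace m (sqrt (m - nu0)))).
      apply time_map_derive; [lra|]. unfold pace_dom. rewrite sqrt_sqrt by lra. lra. }
  destruct (continuity_pt_cont_within (fun _ => True) _ _ Hc eps Heps) as [d [Hd H]].
  exists d; split; auto. intros nu _ Hd'. apply H; auto.
Qed.

Lemma half_length_inj nu m1 m2 : 1/2 <= nu < m1 -> m1 < 1 -> nu < m2 -> m2 < 1 ->
  half_length nu m1 = half_length nu m2 -> m1 = m2.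
Proof.
  intros H1 H2 H3 H4 E.
  destruct (normalized_ode_sol nu m1 H1 H2) as [u [u1 [u2 [S1 [Ua [Ub [U0 [_ UB]]]]]]]].
  destruct (normalized_ode_sol nu m2 ltac:(lra) H4) as [v [v1 [v2 [S2 [Va [Vb [V0 [_ VB]]]]]]]].
  rewrite <- E in S2, Va, Vb, VB.
  pose proof (half_length_pos nu m1 H1 H2).
  rewrite <- U0, <- V0.
  apply (ode_sol_unique (- half_length nu m1) (half_length nu m1) 1 1 u u1 u2 v v1 v2);
    try lra; auto.
  - intros x Hx. specialize (UB x Hx). lra.
  - intros x Hx. specialize (VB x Hx). lra.
  - unfold Icc; lra.
Qed.

Lemma half_length_small nu mb y : 1/2 <= nu < mb -> mb <= 1 -> 0 < y ->
  exists m, nu < m < mb /\ m < 1 /\ half_length nu m < y.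
Proof.
  intros Hnu Hmb Hy.
  set (q := sqrt ((1 - nu) / 8)).
  assert (Hq : 0 < q) by (apply sqrt_lt_R0; lra).
  assert (Hq2 : q * q = (1 - nu) / 8) by (apply sqrt_sqrt; lra).
  assert (Hyq : 0 < (y * q) * (y * q) / 2)
    by (apply Rdiv_lt_0_compat; [apply Rmult_lt_0_compat; apply Rmult_lt_0_compat|]; lra).
  set (e := Rmin ((mb - nu) / 2) (Rmin ((1 - nu) / 2) ((y * q) * (y * q) / 2))).
  assert (He : 0 < e /\ e <= (mb - nu) / 2 /\ e <= (1 - nu) / 2 /\ e <= (y * q) * (y * q) / 2).
  { unfold e, Rmin; repeat destruct Rle_dec; lra. }
  exists (nu + e). split; [lra|split; [lra|]].
  pose proof (half_length_le nu (nu + e) ltac:(lra) ltac:(lra)) as H.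
  replace (nu + e - nu) with e in H by ring.
  assert (Hs : q <= sqrt ((nu + e) * (1 - (nu + e)) / 2)) by (apply sqrt_le_1_alt; nra).
  assert (Hse : sqrt e < y * q).
  { rewrite <- (sqrt_square (y * q)) by nra. apply sqrt_lt_1_alt. lra. }
  eapply Rle_lt_trans; [exact H|].
  apply Rle_lt_trans with (sqrt e / q).
  - apply Rmult_le_compat_l; [apply sqrt_pos|apply Rinv_le_contravar; lra].
  - apply (Rmult_lt_reg_r q); auto. unfold Rdiv.
    rewrite Rmult_assoc, Rinv_l, Rmult_1_r by lra. exact Hse.
Qed.

(* Injectivity plus the intermediate value theorem: a decrease would make some
   [m' < m1] hit the value [half_length nu m2] a second time. *)
Lemma half_length_strict_incr nu m1 m2 : 1/2 <= nu < m1 -> m1 < m2 -> m2 < 1 ->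
  half_length nu m1 < half_length nu m2.
Proof.
  intros H1 H12 H2.
  destruct (Rtotal_order (half_length nu m1) (half_length nu m2)) as [Hlt|[Heq|Hgt]]; auto.
  - apply half_length_inj in Heq; lra.
  - exfalso.
    pose proof (half_length_pos nu m2 ltac:(lra) H2) as Hp.
    destruct (half_length_small nu m1 _ H1 ltac:(lra) Hp) as [m' [Hm' [_ Hlt]]].
    destruct (IVT_Icc m' m1 (half_length nu) (half_length nu m2) ltac:(lra)) as [m'' [Hm'' E]].
    + apply half_length_cont_on; lra.
    + rewrite Rmin_left, Rmax_right; lra.
    + unfold Icc in Hm''. apply half_length_inj in E; lra.
Qed.

Lemma half_length_lt_rev nu m1 m2 : 1/2 <= nu < m1 -> m1 < 1 -> nu < m2 < 1 ->
  half_length nu m1 < half_length nu m2 -> m1 < m2.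
Proof.
  intros H1 H2 H3 H. apply Rnot_le_lt; intro Hle.
  destruct (Req_dec m1 m2) as [<-|E]; [lra|].
  pose proof (half_length_strict_incr nu m2 m1 ltac:(lra) ltac:(lra) ltac:(lra)). lra.
Qed.

Lemma speed_le m t : 1/2 < m < 1 -> t * t <= 3 * m - 3 / 2 -> 0 <= t ->
  speed m t <= sqrt (1 - m) + t.
Proof.
  intros Hm Ht Ht0.
  pose proof (speed_pos m t Hm Ht). pose proof (speed_sqr m t Hm Ht).
  assert (Hs : sqrt (1 - m) * sqrt (1 - m) = 1 - m) by (apply sqrt_sqrt; lra).
  pose proof (sqrt_pos (1 - m)).
  assert (pot_quot m t <= (1 - m) + t * t) by (unfold pot_quot; nra).
  nra.
Qed.

Lemma half_length_ge_log nu m : 1/2 <= nu < m -> m < 1 ->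
  ln (sqrt (1 - m) + sqrt (m - nu)) - ln (sqrt (1 - m)) <= half_length nu m.
Proof.
  intros Hnu Hm.
  set (s := sqrt (1 - m)). set (a := sqrt (m - nu)).
  assert (Hs : 0 < s) by (apply sqrt_lt_R0; lra).
  assert (Ha : 0 < a) by (apply sqrt_lt_R0; lra).
  assert (Ha2 : a * a = m - nu) by (apply sqrt_sqrt; lra).
  assert (Hint : is_RInt (fun t => / (s + t)) 0 a (minus (ln (s + a)) (ln (s + 0)))).
  { apply (@is_RInt_derive R_CompleteNormedModule (fun t => ln (s + t))).
    - intros x Hx. rewrite Rmin_left, Rmax_right in Hx by lra.
      auto_derive; [lra|field; lra].
    - intros x Hx. rewrite Rmin_left, Rmax_right in Hx by lra.
      apply (ex_derive_continuous (fun t => / (s + t))). auto_derive. lra. }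
  assert (Hexk : ex_RInt (pace m) 0 a).
  { apply ex_RInt_pace; [lra|apply pace_dom_0; lra|unfold pace_dom; nra]. }
  pose proof (RInt_le (fun t => / (s + t)) (pace m) 0 a ltac:(lra) (ex_intro _ _ Hint) Hexk)
    as HR.
  rewrite (is_RInt_unique _ _ _ _ Hint) in HR.
  unfold minus, plus, opp in HR; simpl in HR. rewrite Rplus_0_r in HR.
  apply HR. intros t Ht.
  assert (Hg : t * t <= 3 * m - 3 / 2) by nra.
  pose proof (speed_pos m t ltac:(lra) Hg) as Hpos.
  pose proof (speed_le m t ltac:(lra) Hg ltac:(lra)) as Hle. fold s in Hle.
  unfold pace. apply Rinv_le_contravar; lra.
Qed.

Lemma half_length_unbounded nu L : 1/2 <= nu < 1 ->
  exists m, nu < m < 1 /\ L < half_length nu m.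
Proof.
  intros Hnu.
  set (a0 := sqrt ((1 - nu) / 2)).
  assert (Ha0 : 0 < a0) by (apply sqrt_lt_R0; lra).
  set (e := a0 * exp (- L) / 2).
  assert (He : 0 < e) by (pose proof (exp_pos (- L)); unfold e; nra).
  set (d := Rmin (e * e) ((1 - nu) / 2)).
  assert (Hd : 0 < d /\ d <= e * e /\ d <= (1 - nu) / 2) by (unfold d, Rmin; destruct Rle_dec; nra).
  exists (1 - d). split; [lra|].
  eapply Rlt_le_trans; [|apply half_length_ge_log; lra].
  replace (1 - (1 - d)) with d by ring.
  assert (Hs : 0 < sqrt d) by (apply sqrt_lt_R0; lra).
  assert (Hse : sqrt d <= e) by (rewrite <- (sqrt_square e) by lra; apply sqrt_le_1_alt; lra).
  assert (Haa0 : a0 <= sqrt (1 - d - nu)) by (apply sqrt_le_1_alt; lra).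
  assert (ln a0 <= ln (sqrt d + sqrt (1 - d - nu))) by (apply ln_le; lra).
  assert (ln (sqrt d) <= ln e) by (apply ln_le; lra).
  assert (Hle : ln e = ln a0 + - L - ln 2).
  { unfold e, Rdiv. rewrite ln_mult, ln_mult, ln_exp, ln_Rinv; try lra; try apply exp_pos.
    apply Rmult_lt_0_compat; [lra|apply exp_pos]. }
  assert (0 < ln 2) by (rewrite <- ln_1; apply ln_increasing; lra).
  lra.
Qed.

Lemma peak_exists nu L : 1/2 <= nu < 1 -> 0 < L -> exists m, nu < m < 1 /\ half_length nu m = L.
Proof.
  intros Hnu HL.
  destruct (half_length_small nu 1 L ltac:(lra) ltac:(lra) HL) as [m1 [Hm1 [_ H1]]].
  destruct (half_length_unbounded nu L Hnu) as [m2 [Hm2 H2]].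
  assert (Hm12 : m1 < m2) by (apply (half_length_lt_rev nu); lra).
  destruct (IVT_Icc m1 m2 (half_length nu) L ltac:(lra)) as [m [Hm E]].
  - apply half_length_cont_on; lra.
  - rewrite Rmin_left, Rmax_right; lra.
  - exists m; unfold Icc in Hm; split; [lra|auto].
Qed.

(* The maximum [u(0)] of the normalized solution on [[-L, L]] (arbitrary unless [L > 0]). *)
Definition peak nu L := epsilon (inhabits 0) (fun m => nu < m < 1 /\ half_length nu m = L).
Definition slope nu L := edge_slope nu (peak nu L).

Lemma peak_spec nu L : 1/2 <= nu < 1 -> 0 < L ->
  nu < peak nu L < 1 /\ half_length nu (peak nu L) = L.
Proof.
  intros. unfold peak. apply (epsilon_spec (inhabits 0) (fun m => nu < m < 1 /\ half_length nu m = L)).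
  apply peak_exists; auto.
Qed.

Lemma peak_strict_incr nu L1 L2 : 1/2 <= nu < 1 -> 0 < L1 -> L1 < L2 -> peak nu L1 < peak nu L2.
Proof.
  intros Hnu H1 H12.
  destruct (peak_spec nu L1 Hnu H1) as [A1 B1].
  destruct (peak_spec nu L2 Hnu ltac:(lra)) as [A2 B2].
  apply (half_length_lt_rev nu); lra.
Qed.

(* [peak nu L] is trapped in [(m0 - e, m0 + e)] because [half_length] is increasing in [m]
   and, at [m0 -/+ e], continuous in [nu]. *)
Lemma peak_cont nu0 L0 : 1/2 <= nu0 < 1 -> 0 < L0 ->
  forall eps, 0 < eps -> exists delta, 0 < delta /\ forall nu L, 1/2 <= nu < 1 -> 0 < L ->
    Rabs (nu - nu0) < delta -> Rabs (L - L0) < delta -> Rabs (peak nu L - peak nu0 L0) < eps.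
Proof.
  intros Hnu0 HL0 eps Heps.
  destruct (peak_spec nu0 L0 Hnu0 HL0) as [Hm0 E0].
  set (m0 := peak nu0 L0) in *.
  set (e := Rmin eps (Rmin ((m0 - nu0) / 2) ((1 - m0) / 2))).
  assert (He : 0 < e /\ e <= eps /\ e <= (m0 - nu0) / 2 /\ e <= (1 - m0) / 2).
  { unfold e, Rmin; repeat destruct Rle_dec; lra. }
  assert (T1 : half_length nu0 (m0 - e) < L0)
    by (rewrite <- E0; apply half_length_strict_incr; lra).
  assert (T2 : L0 < half_length nu0 (m0 + e))
    by (rewrite <- E0; apply half_length_strict_incr; lra).
  set (gap := Rmin (L0 - half_length nu0 (m0 - e)) (half_length nu0 (m0 + e) - L0)).
  assert (Hgap : 0 < gap /\ gap <= L0 - half_length nu0 (m0 - e) /\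
                 gap <= half_length nu0 (m0 + e) - L0).
  { unfold gap, Rmin; destruct Rle_dec; lra. }
  destruct (half_length_cont_nu nu0 (m0 - e) ltac:(lra) ltac:(lra) (gap / 2) ltac:(lra))
    as [d1 [Hd1 C1]].
  destruct (half_length_cont_nu nu0 (m0 + e) ltac:(lra) ltac:(lra) (gap / 2) ltac:(lra))
    as [d2 [Hd2 C2]].
  set (d := Rmin (Rmin d1 d2) (Rmin (gap / 2) ((m0 - e - nu0) / 2))).
  assert (Hd : 0 < d /\ d <= d1 /\ d <= d2 /\ d <= gap / 2 /\ d <= (m0 - e - nu0) / 2).
  { unfold d, Rmin; repeat destruct Rle_dec; lra. }
  exists d. split; [lra|]. intros nu L Hnu HL Hnud HLd.
  apply Rabs_def2 in Hnud. apply Rabs_def2 in HLd.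
  assert (A1 : Rabs (half_length nu (m0 - e) - half_length nu0 (m0 - e)) < gap / 2)
    by (apply C1; [lra|apply Rabs_def1; lra]).
  assert (A2 : Rabs (half_length nu (m0 + e) - half_length nu0 (m0 + e)) < gap / 2)
    by (apply C2; [lra|apply Rabs_def1; lra]).
  apply Rabs_def2 in A1. apply Rabs_def2 in A2.
  destruct (peak_spec nu L Hnu HL) as [Hm E].
  assert (m0 - e < peak nu L) by (apply (half_length_lt_rev nu); lra).
  assert (peak nu L < m0 + e) by (apply (half_length_lt_rev nu); lra).
  apply Rabs_def1; lra.
Qed.

Lemma pot_diff x y : pot x - pot y = (x - y) * ((x + y) / 2 - (x * x + x * y + y * y) / 3).
Proof. unfold pot; field. Qed.

Lemma pot_lipschitz x y : 0 <= x <= 1 -> 0 <= y <= 1 -> Rabs (pot x - pot y) <= Rabs (x - y).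
Proof.
  intros Hx Hy. rewrite pot_diff, Rabs_mult.
  rewrite <- (Rmult_1_r (Rabs (x - y))) at 2.
  apply Rmult_le_compat_l; [apply Rabs_pos|]. apply Rabs_le. split; nra.
Qed.

Lemma pot_strict_incr x y : 1/2 <= x -> x < y -> y <= 1 -> pot x < pot y.
Proof.
  intros H1 H2 H3. enough (0 < pot y - pot x) by lra.
  rewrite pot_diff. apply Rmult_lt_0_compat; [lra|].
  assert (0 < x * (3 - 2 * x - y)) by (apply Rmult_lt_0_compat; lra).
  assert (0 <= y * (3 - x - 2 * y)) by (apply Rmult_le_pos; lra).
  nra.
Qed.

Lemma pot_1_minus nu : 2 * (pot 1 - pot nu) = (1 - nu) * (1 - nu) * (1 + 2 * nu) / 3.
Proof. unfold pot; field. Qed.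

Definition limit_slope nu := sqrt (2 * (pot 1 - pot nu)).

Lemma limit_slope_arg_nonneg nu : 1/2 <= nu -> 0 <= 2 * (pot 1 - pot nu).
Proof.
  intros. rewrite pot_1_minus. apply Rmult_le_pos; [|lra].
  apply Rmult_le_pos; [apply Rle_0_sqr|lra].
Qed.

Lemma limit_slope_pos nu : 1/2 <= nu < 1 -> 0 < limit_slope nu.
Proof.
  intros. apply sqrt_lt_R0. rewrite pot_1_minus.
  apply Rdiv_lt_0_compat; [|lra]. apply Rmult_lt_0_compat; [|lra]. nra.
Qed.

Lemma limit_slope_strict_decr nu1 nu2 : 1/2 <= nu1 -> nu1 < nu2 -> nu2 < 1 ->
  limit_slope nu2 < limit_slope nu1.
Proof.
  intros. apply sqrt_lt_1_alt. split; [apply limit_slope_arg_nonneg; lra|].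
  pose proof (pot_strict_incr nu1 nu2 H H0 ltac:(lra)). lra.
Qed.

Lemma limit_slope_le nu : 1/2 <= nu < 1 -> limit_slope nu <= 1 - nu.
Proof.
  intros. unfold limit_slope. rewrite pot_1_minus.
  apply Rle_trans with (sqrt ((1 - nu) * (1 - nu))); [|rewrite sqrt_square; lra].
  apply sqrt_le_1_alt. unfold Rdiv. rewrite Rmult_assoc.
  rewrite <- (Rmult_1_r ((1 - nu) * (1 - nu))) at 2.
  apply Rmult_le_compat_l; [apply Rle_0_sqr|lra].
Qed.

Lemma limit_slope_continuity nu : 1/2 <= nu < 1 -> continuity_pt limit_slope nu.
Proof.
  intros Hnu. unfold limit_slope.
  apply (continuity_pt_comp (fun nu => 2 * (pot 1 - pot nu)) sqrt).
  - apply continuity_pt_filterlim.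
    apply (ex_derive_continuous (fun nu => 2 * (pot 1 - pot nu))). unfold pot. auto_derive. auto.
  - apply continuity_pt_sqrt, limit_slope_arg_nonneg; lra.
Qed.

Section SlopeBounds.

Variables nu L : R.
Hypothesis Hnu : 1/2 <= nu < 1.
Hypothesis HL : 0 < L.

Let m_spec : nu < peak nu L < 1 /\ half_length nu (peak nu L) = L.
Proof. apply peak_spec; auto. Qed.

Lemma slope_eq : slope nu L = sqrt (2 * (pot (peak nu L) - pot nu)).
Proof. destruct m_spec. apply edge_slope_eq; lra. Qed.

Lemma slope_pos : 0 < slope nu L.
Proof. destruct m_spec. apply edge_slope_pos; lra. Qed.

Lemma slope_le_half : slope nu L <= L / 2.
Proof.
  destruct m_spec as [H1 H2]. unfold slope. set (m := peak nu L) in *.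
  pose proof (edge_slope_le nu m ltac:(lra) ltac:(lra)).
  pose proof (half_length_ge nu m ltac:(lra) ltac:(lra)). lra.
Qed.

Lemma slope_lt_limit : slope nu L < limit_slope nu.
Proof.
  destruct m_spec as [H1 H2]. rewrite slope_eq. set (m := peak nu L) in *.
  apply sqrt_lt_1_alt. split.
  - pose proof (pot_strict_incr nu m ltac:(lra) ltac:(lra) ltac:(lra)). lra.
  - pose proof (pot_strict_incr m 1 ltac:(lra) ltac:(lra) ltac:(lra)). lra.
Qed.

(* [half_length_le] forces [L^2 (1 - m) <= 4], and
   [limit_slope^2 - slope^2 = (1 - m)^2 (1 + 2 m) / 3]. *)
Lemma limit_slope_gap : limit_slope nu - slope nu L <= 4 / (L * L * limit_slope nu).
Proof.
  pose proof (limit_slope_pos nu Hnu) as Hg. pose proof slope_pos as Hp.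
  pose proof slope_lt_limit as Hlt. pose proof slope_eq as Hsl.
  destruct m_spec as [H1 H2]. set (m := peak nu L) in *.
  pose proof (half_length_le nu m ltac:(lra) ltac:(lra)) as HT. rewrite H2 in HT.
  set (s := sqrt (m * (1 - m) / 2)) in HT. set (a := sqrt (m - nu)) in HT.
  assert (Hs : 0 < s) by (apply sqrt_lt_R0; nra).
  assert (Hs2 : s * s = m * (1 - m) / 2) by (apply sqrt_sqrt; nra).
  assert (Ha2 : a * a = m - nu) by (apply sqrt_sqrt; lra).
  assert (Ha : 0 < a) by (apply sqrt_lt_R0; lra).
  assert (HLs : L * s <= a).
  { apply (Rmult_le_reg_r (/ s)); [apply Rinv_0_lt_compat; lra|].
    rewrite Rmult_assoc, Rinv_r, Rmult_1_r by lra. exact HT. }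
  assert (H1m : L * L * (1 - m) <= 4).
  { assert (L * s * (L * s) <= a * a) by (apply Rmult_le_compat; nra). nra. }
  assert (Hdiff : limit_slope nu * limit_slope nu - slope nu L * slope nu L <= (1 - m) * (1 - m)).
  { unfold limit_slope. rewrite Hsl, !sqrt_sqrt by (try apply limit_slope_arg_nonneg;
      try pose proof (pot_strict_incr nu m ltac:(lra) ltac:(lra) ltac:(lra)); lra).
    replace (2 * (pot 1 - pot nu) - 2 * (pot m - pot nu))
      with ((1 - m) * (1 - m) * ((1 + 2 * m) / 3)) by (unfold pot; field).
    rewrite <- (Rmult_1_r ((1 - m) * (1 - m))) at 2. apply Rmult_le_compat_l; nra. }
  assert (Hq : limit_slope nu - slope nu L <= (1 - m) * (1 - m) / limit_slope nu).
  { apply (Rmult_le_reg_r (limit_slope nu)); auto. unfold Rdiv.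
    rewrite Rmult_assoc, Rinv_l, Rmult_1_r by lra. clear Hsl. nra. }
  eapply Rle_trans; [exact Hq|].
  unfold Rdiv. rewrite Rinv_mult, <- Rmult_assoc.
  apply Rmult_le_compat_r; [left; apply Rinv_0_lt_compat; lra|].
  apply (Rmult_le_reg_l (L * L)); [nra|].
  replace (L * L * (4 * / (L * L))) with 4 by (field; lra).
  assert ((1 - m) * (1 - m) <= 1 - m) by nra. nra.
Qed.

End SlopeBounds.

Lemma slope_strict_incr nu L1 L2 : 1/2 <= nu < 1 -> 0 < L1 -> L1 < L2 -> slope nu L1 < slope nu L2.
Proof.
  intros Hnu H1 H12.
  pose proof (peak_strict_incr nu L1 L2 Hnu H1 H12).
  destruct (peak_spec nu L1 Hnu H1). destruct (peak_spec nu L2 Hnu ltac:(lra)).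
  rewrite (slope_eq nu L1), (slope_eq nu L2) by lra.
  apply sqrt_lt_1_alt. split.
  - pose proof (pot_strict_incr nu (peak nu L1) ltac:(lra) ltac:(lra) ltac:(lra)). lra.
  - pose proof (pot_strict_incr (peak nu L1) (peak nu L2) ltac:(lra) ltac:(lra) ltac:(lra)). lra.
Qed.

Lemma slope_cont nu0 L0 : 1/2 <= nu0 < 1 -> 0 < L0 ->
  forall eps, 0 < eps -> exists delta, 0 < delta /\ forall nu L, 1/2 <= nu < 1 -> 0 < L ->
    Rabs (nu - nu0) < delta -> Rabs (L - L0) < delta -> Rabs (slope nu L - slope nu0 L0) < eps.
Proof.
  intros Hnu0 HL0 eps Heps.
  set (e := eps * eps / 4).
  assert (He : 0 < e) by (unfold e; nra).
  destruct (peak_cont nu0 L0 Hnu0 HL0 e He) as [d [Hd H]].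
  exists (Rmin d e). split; [apply Rmin_pos; lra|].
  intros nu L Hnu HL Hn HLL.
  specialize (H nu L Hnu HL (Rlt_le_trans _ _ _ Hn (Rmin_l _ _))
    (Rlt_le_trans _ _ _ HLL (Rmin_l _ _))).
  assert (Hn2 := Rlt_le_trans _ _ _ Hn (Rmin_r _ _)).
  destruct (peak_spec nu L Hnu HL) as [Hm _]. destruct (peak_spec nu0 L0 Hnu0 HL0) as [Hm0 _].
  rewrite (slope_eq nu L), (slope_eq nu0 L0) by auto.
  pose proof (pot_strict_incr nu (peak nu L) ltac:(lra) ltac:(lra) ltac:(lra)).
  pose proof (pot_strict_incr nu0 (peak nu0 L0) ltac:(lra) ltac:(lra) ltac:(lra)).
  eapply Rle_lt_trans; [apply sqrt_diff_le; lra|].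
  rewrite <- (sqrt_square eps) by lra. apply sqrt_lt_1_alt. split; [apply Rabs_pos|].
  replace (2 * (pot (peak nu L) - pot nu) - 2 * (pot (peak nu0 L0) - pot nu0)) with
    (2 * ((pot (peak nu L) - pot (peak nu0 L0)) - (pot nu - pot nu0))) by ring.
  rewrite Rabs_mult, Rabs_right by lra.
  pose proof (pot_lipschitz (peak nu L) (peak nu0 L0) ltac:(lra) ltac:(lra)).
  pose proof (pot_lipschitz nu nu0 ltac:(lra) ltac:(lra)).
  assert (Rabs ((pot (peak nu L) - pot (peak nu0 L0)) - (pot nu - pot nu0)) <=
    Rabs (pot (peak nu L) - pot (peak nu0 L0)) + Rabs (pot nu - pot nu0)).
  { unfold Rminus at 1. eapply Rle_trans; [apply Rabs_triang|rewrite Rabs_Ropp; lra]. }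
  unfold e in *. lra.
Qed.

Lemma slope_strict_decr_nu nu1 nu2 L : 1/2 <= nu1 -> nu1 < nu2 -> nu2 < 1 -> 0 < L ->
  slope nu2 L < slope nu1 L.
Proof.
  intros H1 H12 H2 HL.
  destruct (peak_spec nu1 L ltac:(lra) HL) as [Hm1 E1].
  destruct (peak_spec nu2 L ltac:(lra) HL) as [Hm2 E2].
  unfold slope.
  destruct (normalized_ode_sol nu1 (peak nu1 L) ltac:(lra) ltac:(lra))
    as [w [w1 [w2 [S1 [Wa [Wb [_ [W1 WB]]]]]]]].
  destruct (normalized_ode_sol nu2 (peak nu2 L) ltac:(lra) ltac:(lra))
    as [v [v1 [v2 [S2 [Va [Vb [_ [V1 VB]]]]]]]].
  rewrite E1 in S1, Wa, Wb, W1, WB. rewrite E2 in S2, Va, Vb, V1, VB.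
  rewrite <- W1, <- V1.
  apply (ode_sol_slope_decr (- L) L 1 1 nu1 nu2 w w1 w2 v v1 v2); try lra; auto.
  - intros x Hx. specialize (WB x Hx). lra.
  - intros x Hx. specialize (VB x Hx). lra.
Qed.

Lemma slope_tends_to_limit nu : 1/2 <= nu < 1 -> forall e, 0 < e ->
  exists K, 0 < K /\ forall L, K < L -> 0 < limit_slope nu - slope nu L < e.
Proof.
  intros Hnu e He. pose proof (limit_slope_pos nu Hnu) as Hg.
  assert (HK0 : 0 < 4 / (e * limit_slope nu)) by (apply Rdiv_lt_0_compat; nra).
  exists (4 / (e * limit_slope nu) + 1). split; [lra|]. intros L HL.
  pose proof (slope_lt_limit nu L Hnu ltac:(lra)).
  pose proof (limit_slope_gap nu L Hnu ltac:(lra)).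
  split; [lra|]. eapply Rle_lt_trans; [eassumption|].
  apply (Rmult_lt_reg_r (L * L * limit_slope nu)); [apply Rmult_lt_0_compat; nra|].
  unfold Rdiv. rewrite Rmult_assoc, Rinv_l, Rmult_1_r
    by (apply Rgt_not_eq, Rmult_lt_0_compat; nra).
  assert (4 < L * (e * limit_slope nu)).
  { apply (Rmult_lt_reg_r (/ (e * limit_slope nu))); [apply Rinv_0_lt_compat; nra|].
    rewrite Rmult_assoc, Rinv_r, Rmult_1_r by nra. unfold Rdiv in HL. lra. }
  nra.
Qed.

Definition cont4_at (D : R -> R -> R -> R -> Prop) (f : R -> R -> R -> R -> R) a b c d :=
  forall eps, 0 < eps -> exists delta, 0 < delta /\
    forall a' b' c' d', D a' b' c' d' ->
      Rabs (a' - a) < delta -> Rabs (b' - b) < delta -> Rabs (c' - c) < delta ->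
      Rabs (d' - d) < delta ->
      Rabs (f a' b' c' d' - f a b c d) < eps.

Definition cont2_at (E : R -> R -> Prop) (h : R -> R -> R) x y :=
  forall eps, 0 < eps -> exists delta, 0 < delta /\ forall x' y', E x' y' ->
    Rabs (x' - x) < delta -> Rabs (y' - y) < delta -> Rabs (h x' y' - h x y) < eps.

Section Cont4At.

Variable D : R -> R -> R -> R -> Prop.
Variables a b c d : R.

Lemma cont4_at_fst : cont4_at D (fun a _ _ _ => a) a b c d.
Proof. intros e He. exists e; split; auto. Qed.

Lemma cont4_at_snd : cont4_at D (fun _ b _ _ => b) a b c d.
Proof. intros e He. exists e; split; auto. Qed.

Lemma cont4_at_thd : cont4_at D (fun _ _ c _ => c) a b c d.
Proof. intros e He. exists e; split; auto. Qed.

Lemma cont4_at_fth : cont4_at D (fun _ _ _ d => d) a b c d.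
Proof. intros e He. exists e; split; auto. Qed.

Lemma cont4_at_comp2 (E : R -> R -> Prop) h f g :
  cont4_at D f a b c d -> cont4_at D g a b c d ->
  (forall a' b' c' d', D a' b' c' d' -> E (f a' b' c' d') (g a' b' c' d')) ->
  cont2_at E h (f a b c d) (g a b c d) ->
  cont4_at D (fun a b c d => h (f a b c d) (g a b c d)) a b c d.
Proof.
  intros Hf Hg HE Hh eps Heps.
  destruct (Hh eps Heps) as [d0 [Hd0 H0]].
  destruct (Hf d0 Hd0) as [d1 [Hd1 H1]].
  destruct (Hg d0 Hd0) as [d2 [Hd2 H2]].
  exists (Rmin d1 d2). split; [apply Rmin_pos; auto|].
  intros a' b' c' d' HD Ha Hb Hc Hd.
  pose proof (Rmin_l d1 d2). pose proof (Rmin_r d1 d2).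
  apply H0; [apply HE; auto|apply H1|apply H2]; auto; lra.
Qed.

Lemma cont4_at_comp1 h f : cont4_at D f a b c d -> continuity_pt h (f a b c d) ->
  cont4_at D (fun a b c d => h (f a b c d)) a b c d.
Proof.
  intros Hf Hh eps Heps.
  destruct (continuity_pt_cont_within (fun _ => True) h _ Hh eps Heps) as [d0 [Hd0 H0]].
  destruct (Hf d0 Hd0) as [d1 [Hd1 H1]].
  exists d1. split; auto.
Qed.

Lemma cont4_at_mult f g : cont4_at D f a b c d -> cont4_at D g a b c d ->
  cont4_at D (fun a b c d => f a b c d * g a b c d) a b c d.
Proof.
  intros Hf Hg. apply (cont4_at_comp2 (fun _ _ => True) Rmult f g Hf Hg); auto.
  intros eps Heps.
  destruct (continuity_2d_pt_mult (fun u v => u) (fun u v => v) (f a b c d) (g a b c d)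
    (continuity_2d_pt_id1 _ _) (continuity_2d_pt_id2 _ _) (mkposreal eps Heps)) as [d0 Hd0].
  exists d0. split; [apply cond_pos|]. intros. apply Hd0; auto.
Qed.

Lemma cont4_at_scale_factor : 0 < a -> 0 < b ->
  cont4_at D (fun a b _ _ => a * sqrt (b * a)) a b c d.
Proof.
  intros Ha Hb. apply (cont4_at_mult (fun a _ _ _ => a) (fun a b _ _ => sqrt (b * a)));
    [apply cont4_at_fst|].
  apply (cont4_at_comp1 sqrt (fun a b _ _ => b * a)).
  - apply (cont4_at_mult (fun _ b _ _ => b) (fun a _ _ _ => a));
      [apply cont4_at_snd|apply cont4_at_fst].
  - apply continuity_pt_sqrt. nra.
Qed.

End Cont4At.

Definition interval (D : R -> Prop) := forall x y z, D x -> D z -> x <= y <= z -> D y.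

(* [G] stays within [eps] of [G y0] because [f] maps the bracketing points
   [G y0 -/+ eps/2] (when they lie in [D]) strictly below and above [y0]. *)
Lemma strict_incr_inverse_cont (D E : R -> Prop) f G : interval D -> strict_incr_on D f ->
  (forall y, E y -> D (G y) /\ f (G y) = y) -> cont_on E G.
Proof.
  intros HD Hinc HG y0 Hy0 eps Heps.
  destruct (HG y0 Hy0) as [HD0 Hf0]. set (x0 := G y0) in *.
  assert (Hle : forall x1 x2, D x1 -> D x2 -> x1 <= x2 -> f x1 <= f x2).
  { intros x1 x2 H1 H2 Hl. destruct (Req_dec x1 x2) as [->|Hn]; [lra|].
    left; apply Hinc; auto; lra. }
  assert (Hlo : exists d1, 0 < d1 /\ forall y, E y -> Rabs (y - y0) < d1 -> x0 - eps / 2 < G y).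
  { destruct (classic (D (x0 - eps / 2))) as [HD1|HD1].
    - exists (y0 - f (x0 - eps / 2)). split.
      + pose proof (Hinc (x0 - eps / 2) x0 HD1 HD0 ltac:(lra)). lra.
      + intros y Hy Hyd. destruct (HG y Hy) as [HDy Hfy].
        apply Rnot_le_lt; intro Hc. pose proof (Hle _ _ HDy HD1 Hc).
        apply Rabs_def2 in Hyd. lra.
    - exists 1. split; [lra|]. intros y Hy _. destruct (HG y Hy) as [HDy _].
      apply Rnot_le_lt; intro Hc. apply HD1. apply (HD (G y) _ x0); auto; lra. }
  assert (Hhi : exists d2, 0 < d2 /\ forall y, E y -> Rabs (y - y0) < d2 -> G y < x0 + eps / 2).
  { destruct (classic (D (x0 + eps / 2))) as [HD2|HD2].
    - exists (f (x0 + eps / 2) - y0). split.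
      + pose proof (Hinc x0 (x0 + eps / 2) HD0 HD2 ltac:(lra)). lra.
      + intros y Hy Hyd. destruct (HG y Hy) as [HDy Hfy].
        apply Rnot_le_lt; intro Hc. pose proof (Hle _ _ HD2 HDy Hc).
        apply Rabs_def2 in Hyd. lra.
    - exists 1. split; [lra|]. intros y Hy _. destruct (HG y Hy) as [HDy _].
      apply Rnot_le_lt; intro Hc. apply HD2. apply (HD x0 _ (G y)); auto; lra. }
  destruct Hlo as [d1 [Hd1 H1]]. destruct Hhi as [d2 [Hd2 H2]].
  exists (Rmin d1 d2). split; [apply Rmin_pos; auto|].
  intros y Hy Hyd.
  specialize (H1 y Hy (Rlt_le_trans _ _ _ Hyd (Rmin_l _ _))).
  specialize (H2 y Hy (Rlt_le_trans _ _ _ Hyd (Rmin_r _ _))).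
  apply Rabs_def1; lra.
Qed.

Lemma homeo_of_strict_incr (D E : R -> Prop) f : interval D -> strict_incr_on D f ->
  cont_on D f -> (forall x, D x -> E (f x)) -> (forall y, E y -> exists x, D x /\ f x = y) ->
  homeo_onto D E f.
Proof.
  intros HD Hinc Hc Hmap Hsurj.
  set (G := fun y => epsilon (inhabits 0) (fun x => D x /\ f x = y)).
  assert (HG : forall y, E y -> D (G y) /\ f (G y) = y)
    by (intros y Hy; apply (epsilon_spec (inhabits 0) (fun x => D x /\ f x = y)); auto).
  split; [auto|split; [auto|]]. exists G.
  split; [intros; apply HG; auto|].
  split; [apply (strict_incr_inverse_cont D E f G); auto|].
  split; [|intros y Hy; apply HG; auto].
  intros x Hx. destruct (HG (f x) (Hmap x Hx)) as [H1 H2].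
  destruct (Rtotal_order (G (f x)) x) as [Hl|[Hl|Hl]]; auto.
  - pose proof (Hinc _ _ H1 Hx Hl). lra.
  - pose proof (Hinc _ _ Hx H1 Hl). lra.
Qed.

Lemma homeo_of_strict_decr (D E : R -> Prop) f : interval D -> strict_decr_on D f ->
  cont_on D f -> (forall x, D x -> E (f x)) -> (forall y, E y -> exists x, D x /\ f x = y) ->
  homeo_onto D E f.
Proof.
  intros HD Hdec Hc Hmap Hsurj.
  destruct (homeo_of_strict_incr (fun x => D (- x)) E (fun x => f (- x)))
    as [_ [_ [G [HG1 [HG2 [HG3 HG4]]]]]].
  - intros x y z Hx Hz Hy. apply (HD (- z) (- y) (- x)); auto; lra.
  - intros x y Hx Hy Hxy. apply Hdec; auto; lra.
  - intros x Hx eps Heps. destruct (Hc (- x) Hx eps Heps) as [d [Hd H]].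
    exists d; split; auto. intros y Hy Hyx. apply H; auto.
    replace (- y - - x) with (- (y - x)) by ring. rewrite Rabs_Ropp; auto.
  - intros x Hx; apply Hmap; auto.
  - intros y Hy. destruct (Hsurj y Hy) as [x [Hx Hfx]]. exists (- x).
    rewrite Ropp_involutive. auto.
  - split; [auto|split; [auto|]]. exists (fun y => - G y).
    split; [intros; apply HG1; auto|]. split; [|split].
    + intros y Hy. apply cont_within_opp, HG2, Hy.
    + intros x Hx. pose proof (HG3 (- x)) as H. rewrite !Ropp_involutive in H.
      rewrite H by auto. ring.
    + intros y Hy. apply HG4; auto.
Qed.

Lemma deriv_within_reflect Rr f x l : deriv_within (Icc (- Rr) Rr) f (- x) l ->
  deriv_within (Icc (- Rr) Rr) (fun y => f (- y)) x (- l).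
Proof.
  intros H eps Heps. destruct (H eps Heps) as [d [Hd H2]].
  exists d; split; auto. intros y Hy Hne Hyd.
  specialize (H2 (- y) ltac:(unfold Icc in *; lra) ltac:(lra)
    ltac:(replace (- y - - x) with (- (y - x)) by ring; rewrite Rabs_Ropp; auto)).
  replace ((f (- y) - f (- x)) / (y - x) - - l)
    with (- ((f (- y) - f (- x)) / (- y - - x) - l)) by (field; lra).
  rewrite Rabs_Ropp; auto.
Qed.

Lemma cont_within_reflect Rr f x : cont_within (Icc (- Rr) Rr) f (- x) ->
  cont_within (Icc (- Rr) Rr) (fun y => f (- y)) x.
Proof.
  intros H eps Heps. destruct (H eps Heps) as [d [Hd H2]].
  exists d; split; auto. intros y Hy Hyd. apply H2; [unfold Icc in *; lra|].
  replace (- y - - x) with (- (y - x)) by ring. rewrite Rabs_Ropp; auto.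
Qed.

Lemma pos_sol_reflect A M nu Rr w : pos_sol A M nu Rr w -> pos_sol A M nu Rr (fun x => w (- x)).
Proof.
  intros [w1 [w2 [HC [HE [Ha [Hb Hp]]]]]].
  exists (fun x => - w1 (- x)), (fun x => w2 (- x)).
  assert (Hs : forall x, Icc (- Rr) Rr x -> Icc (- Rr) Rr (- x)) by (unfold Icc; intros; lra).
  split; [|split; [|split; [|split]]].
  - intros x Hx. destruct (HC (- x) (Hs x Hx)) as [D1 [D2 C3]]. split; [|split].
    + apply deriv_within_reflect; auto.
    + pose proof (deriv_within_reflect Rr (fun y => - w1 y) x (- w2 (- x))
        (deriv_within_opp _ _ _ _ D2)) as H.
      rewrite Ropp_involutive in H. exact H.
    + apply cont_within_reflect; auto.
  - intros x Hx. apply HE. lra.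
  - simpl. rewrite Ropp_involutive. auto.
  - auto.
  - intros x Hx. apply Hp. auto.
Qed.

Lemma ode_sol_of_pos_sol A M nu Rr w : 0 < Rr -> pos_sol A M nu Rr w ->
  exists w1 w2, ode_sol (- Rr) Rr A M w w1 w2.
Proof.
  intros HR [w1 [w2 [HC [HE _]]]].
  exists w1, w2. split; [split; [|split]|auto].
  - intros x Hx. destruct (HC x ltac:(unfold Icc; lra)) as [D1 [D2 _]].
    split; apply (is_derive_of_deriv_within_interior (- Rr) Rr); auto.
  - intros x Hx. destruct (HC x Hx) as [D1 _]. apply (deriv_within_cont_within _ _ _ _ D1).
  - intros x Hx. destruct (HC x Hx) as [_ [D2 _]]. apply (deriv_within_cont_within _ _ _ _ D2).
Qed.

Lemma cont_within_scale Rr c K f x : 0 < c ->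
  cont_within (Icc (- (c * Rr)) (c * Rr)) f (c * x) ->
  cont_within (Icc (- Rr) Rr) (fun y => K * f (c * y)) x.
Proof.
  intros Hc H eps Heps. pose proof (Rabs_pos K).
  destruct (H (eps / (Rabs K + 1))) as [d [Hd H2]]; [apply Rdiv_lt_0_compat; lra|].
  exists (d / c). split; [apply Rdiv_lt_0_compat; lra|]. intros y Hy Hyd.
  assert (Hcy : Icc (- (c * Rr)) (c * Rr) (c * y)) by (unfold Icc in *; split; nra).
  assert (Hd' : Rabs (c * y - c * x) < d).
  { replace (c * y - c * x) with (c * (y - x)) by ring.
    rewrite Rabs_mult, (Rabs_right c) by lra.
    apply (Rmult_lt_reg_r (/ c)); [apply Rinv_0_lt_compat; lra|].
    replace (c * Rabs (y - x) * / c) with (Rabs (y - x)) by (field; lra). exact Hyd. }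
  specialize (H2 (c * y) Hcy Hd').
  replace (K * f (c * y) - K * f (c * x)) with (K * (f (c * y) - f (c * x))) by ring.
  rewrite Rabs_mult.
  apply Rle_lt_trans with (Rabs K * (eps / (Rabs K + 1))).
  - apply Rmult_le_compat_l; lra.
  - apply (Rmult_lt_reg_r (Rabs K + 1)); [lra|].
    replace (Rabs K * (eps / (Rabs K + 1)) * (Rabs K + 1)) with (Rabs K * eps) by (field; lra).
    nra.
Qed.

Lemma C2_with_scale Rr c A u u1 u2 : 0 < c ->
  (forall x, Icc (- (c * Rr)) (c * Rr) x -> is_derive u x (u1 x) /\ is_derive u1 x (u2 x)) ->
  cont_on (Icc (- (c * Rr)) (c * Rr)) u2 ->
  C2_with (- Rr) Rr (fun x => A * u (c * x)) (fun x => A * c * u1 (c * x))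
    (fun x => A * c * c * u2 (c * x)).
Proof.
  intros Hc Hd Hcont x Hx.
  assert (Hcx : Icc (- (c * Rr)) (c * Rr) (c * x)) by (unfold Icc in *; split; nra).
  assert (Dlin : is_derive (fun x => c * x) x c) by (auto_derive; auto; ring).
  destruct (Hd (c * x) Hcx) as [D1 D2].
  split; [|split].
  - apply deriv_within_of_is_derive.
    apply (is_derive_eq_val _ _ _ _ (is_derive_scal _ x A _ (is_derive_comp_R u _ x _ _ D1 Dlin))).
    simpl. unfold mult; simpl. ring.
  - apply deriv_within_of_is_derive.
    apply (is_derive_eq_val _ _ _ _
      (is_derive_scal _ x (A * c) _ (is_derive_comp_R u1 _ x _ _ D2 Dlin))).
    simpl. unfold mult; simpl. ring.
  - apply cont_within_scale; auto.
Qed.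

Definition Phi A M nu Rr := A * sqrt (M * A) * slope nu (sqrt (M * A) * Rr).
Definition gamma A M nu := A * sqrt (M * A) * limit_slope nu.

Lemma scale_factor_spec A M : 0 < A -> 0 < M -> 0 < sqrt (M * A) /\ sqrt (M * A) * sqrt (M * A) = M * A.
Proof. intros. split; [apply sqrt_lt_R0|apply sqrt_sqrt]; nra. Qed.

Lemma exists_scaled_solution A M nu Rr : adm A M nu Rr ->
  exists w, pos_sol A M nu Rr w /\ (forall x, - Rr < x < Rr -> nu * A < w x < A) /\
    deriv_within (Icc (- Rr) Rr) w (- Rr) (Phi A M nu Rr).
Proof.
  intros [HA [HM [Hnu HR]]].
  destruct (scale_factor_spec A M HA HM) as [Hc Hc2]. set (c := sqrt (M * A)) in *.
  set (L := c * Rr). assert (HL : 0 < L) by (unfold L; nra).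
  destruct (peak_spec nu L Hnu HL) as [Hm ET].
  destruct (normalized_solution nu (peak nu L) ltac:(lra) ltac:(lra))
    as [u [u1 [u2 [Hd [Ua [Ub [_ [U1 [UB UB2]]]]]]]]].
  rewrite ET in Hd, Ua, Ub, U1, UB, UB2.
  assert (Hcu2 : cont_on (Icc (- L) L) u2).
  { intros x Hx. destruct (Hd x Hx) as [D1 [_ E]].
    apply (cont_within_ext _ _ (fun x => u x * u x - u x)); auto.
    { intros y Hy. destruct (Hd y Hy) as [_ [_ E']]. exact E'. }
    apply continuity_pt_cont_within. pose proof (is_derive_continuity_pt _ _ _ D1).
    apply continuity_pt_minus; [apply continuity_pt_mult|]; auto. }
  pose proof (C2_with_scale Rr c A u u1 u2 Hc
    (fun x Hx => conj (proj1 (Hd x Hx)) (proj1 (proj2 (Hd x Hx)))) Hcu2) as HC2.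
  assert (Hin : forall x, Icc (- Rr) Rr x -> Icc (- L) L (c * x))
    by (unfold Icc, L; intros; split; nra).
  exists (fun x => A * u (c * x)). split; [|split].
  - exists (fun x => A * c * u1 (c * x)), (fun x => A * c * c * u2 (c * x)).
    split; [exact HC2|split; [|split; [|split]]].
    + intros x Hx. destruct (Hd (c * x) (Hin x ltac:(unfold Icc; lra))) as [_ [_ E]].
      rewrite E. replace (A * c * c) with (A * (M * A)) by (rewrite Rmult_assoc, Hc2; ring). ring.
    + replace (c * - Rr) with (- L) by (unfold L; ring). rewrite Ua. ring.
    + fold L. rewrite Ub. ring.
    + intros x Hx. destruct (UB (c * x) (Hin x Hx)). nra.
  - intros x Hx.
    pose proof (UB2 (c * x) ltac:(unfold L; split; nra)).
    pose proof (UB (c * x) (Hin x ltac:(unfold Icc; lra))). split; nra.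
  - destruct (HC2 (- Rr) ltac:(unfold Icc; lra)) as [D1 _].
    replace (Phi A M nu Rr) with (A * c * u1 (c * - Rr)); auto.
    unfold Phi. fold c L. replace (c * - Rr) with (- L) by (unfold L; ring). rewrite U1.
    unfold slope. ring.
Qed.

Lemma pos_sol_unique A M nu Rr w v : adm A M nu Rr ->
  pos_sol A M nu Rr w -> pos_sol A M nu Rr v -> forall x, Icc (- Rr) Rr x -> w x = v x.
Proof.
  intros [HA [HM [Hnu HR]]] Hw Hv.
  assert (Hbounds : forall z, pos_sol A M nu Rr z -> exists z1 z2, ode_sol (- Rr) Rr A M z z1 z2 /\
    z (- Rr) = nu * A /\ z Rr = nu * A /\ forall x, Icc (- Rr) Rr x -> A / 2 <= z x <= A).
  { intros z Hz. destruct (ode_sol_of_pos_sol A M nu Rr z HR Hz) as [z1 [z2 S]].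
    destruct Hz as [y1 [y2 [_ [_ [Za [Zb Zp]]]]]].
    exists z1, z2. split; [|split; [|split]]; auto.
    intros x Hx. pose proof (ode_sol_between (- Rr) Rr A M nu z z1 z2 ltac:(lra) HA HM
      ltac:(lra) S Za Zb Zp x Hx). nra. }
  destruct (Hbounds w Hw) as [w1 [w2 [Sw [Wa [Wb Bw]]]]].
  destruct (Hbounds v Hv) as [v1 [v2 [Sv [Va [Vb Bv]]]]].
  apply (ode_sol_unique (- Rr) Rr A M w w1 w2 v v1 v2); auto; lra.
Qed.

Lemma pos_sol_even A M nu Rr w : adm A M nu Rr -> pos_sol A M nu Rr w ->
  forall x, Icc (- Rr) Rr x -> w (- x) = w x.
Proof.
  intros Had Hw. exact (pos_sol_unique A M nu Rr _ w Had (pos_sol_reflect A M nu Rr w Hw) Hw).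
Qed.

Lemma pos_sol_strict_bounds A M nu Rr w : adm A M nu Rr -> pos_sol A M nu Rr w ->
  forall x, - Rr < x < Rr -> nu * A < w x < A.
Proof.
  intros Had Hw x Hx.
  destruct (exists_scaled_solution A M nu Rr Had) as [w0 [Hw0 [B0 _]]].
  rewrite (pos_sol_unique A M nu Rr w w0 Had Hw Hw0 x) by (unfold Icc; lra). auto.
Qed.

Lemma pos_sol_edge_deriv A M nu Rr w : adm A M nu Rr -> pos_sol A M nu Rr w ->
  deriv_within (Icc (- Rr) Rr) w (- Rr) (Phi A M nu Rr).
Proof.
  intros Had Hw. pose proof Had as [_ [_ [_ HR]]].
  destruct (exists_scaled_solution A M nu Rr Had) as [w0 [Hw0 [_ D0]]].
  apply (deriv_within_ext _ w w0); auto; [|unfold Icc; lra].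
  intros y Hy. apply (pos_sol_unique A M nu Rr w w0); auto.
Qed.

Lemma Phi_pos A M nu Rr : adm A M nu Rr -> 0 < Phi A M nu Rr.
Proof.
  intros [HA [HM [Hnu HR]]]. destruct (scale_factor_spec A M HA HM) as [Hc _].
  pose proof (slope_pos nu (sqrt (M * A) * Rr) Hnu ltac:(nra)).
  unfold Phi. apply Rmult_lt_0_compat; [apply Rmult_lt_0_compat|]; auto.
Qed.

Lemma Phi_cont4_at A M nu Rr : adm A M nu Rr -> cont4_at adm Phi A M nu Rr.
Proof.
  intros Had. pose proof Had as [HA [HM [Hnu HR]]].
  apply (cont4_at_mult adm A M nu Rr (fun a b _ _ => a * sqrt (b * a))
    (fun a b c d => slope c (sqrt (b * a) * d))); [apply cont4_at_scale_factor; auto|].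
  apply (cont4_at_comp2 adm A M nu Rr (fun x y => 1/2 <= x < 1 /\ 0 < y) slope
    (fun _ _ c _ => c) (fun a b _ d => sqrt (b * a) * d)).
  - apply cont4_at_thd.
  - apply (cont4_at_mult adm A M nu Rr (fun a b _ _ => sqrt (b * a)) (fun _ _ _ d => d));
      [|apply cont4_at_fth].
    apply (cont4_at_comp1 adm A M nu Rr sqrt (fun a b _ _ => b * a));
      [|apply continuity_pt_sqrt; nra].
    apply (cont4_at_mult adm A M nu Rr (fun _ b _ _ => b) (fun a _ _ _ => a));
      [apply cont4_at_snd|apply cont4_at_fst].
  - intros a' b' c' d' [H1 [H2 [H3 H4]]]. split; auto.
    apply Rmult_lt_0_compat; auto. apply sqrt_lt_R0; nra.
  - intros eps Heps.
    destruct (slope_cont nu (sqrt (M * A) * Rr) Hnu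
      ltac:(apply Rmult_lt_0_compat; auto; apply sqrt_lt_R0; nra) eps Heps) as [d [Hd H]].
    exists d; split; auto. intros x' y' [E1 E2] H1 H2. apply H; auto.
Qed.

Lemma Phi_cont4 : cont4_on adm Phi.
Proof. intros A M nu Rr Had. apply Phi_cont4_at, Had. Qed.

Lemma Phi_cont_R A M nu : 0 < A -> 0 < M -> 1/2 <= nu < 1 ->
  cont_on (fun Rr => 0 < Rr) (Phi A M nu).
Proof.
  intros HA HM Hnu R0 HR0 eps Heps.
  destruct (Phi_cont4_at A M nu R0 (conj HA (conj HM (conj Hnu HR0))) eps Heps) as [d [Hd H]].
  exists d; split; auto. intros y Hy Hyd.
  apply H; try (rewrite Rminus_diag, Rabs_R0; exact Hd); auto. repeat split; auto; lra.
Qed.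

Lemma Phi_cont_nu A M Rr : 0 < A -> 0 < M -> 0 < Rr ->
  cont_on (fun nu => 1/2 <= nu < 1) (fun nu => Phi A M nu Rr).
Proof.
  intros HA HM HR nu0 Hnu0 eps Heps.
  destruct (Phi_cont4_at A M nu0 Rr (conj HA (conj HM (conj Hnu0 HR))) eps Heps) as [d [Hd H]].
  exists d; split; auto. intros y Hy Hyd.
  apply H; try (rewrite Rminus_diag, Rabs_R0; exact Hd); auto. repeat split; auto; lra.
Qed.

Lemma Phi_le A M nu Rr : adm A M nu Rr -> Phi A M nu Rr <= A * (M * A) * Rr / 2.
Proof.
  intros [HA [HM [Hnu HR]]]. destruct (scale_factor_spec A M HA HM) as [Hc Hc2].
  pose proof (slope_le_half nu (sqrt (M * A) * Rr) Hnu ltac:(nra)).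
  unfold Phi.
  replace (A * (M * A) * Rr / 2) with (A * (sqrt (M * A) * sqrt (M * A)) * Rr / 2)
    by (rewrite Hc2; ring).
  apply Rle_trans with (A * sqrt (M * A) * (sqrt (M * A) * Rr / 2)); [|right; field].
  apply Rmult_le_compat_l; nra.
Qed.

Lemma Phi_vanishes_at_0 A M nu : 0 < A -> 0 < M -> 1/2 <= nu < 1 ->
  forall eps, 0 < eps -> exists delta, 0 < delta /\
    forall Rr, 0 < Rr < delta -> Rabs (Phi A M nu Rr) < eps.
Proof.
  intros HA HM Hnu eps Heps.
  assert (HAMA : 0 < A * (M * A)) by (apply Rmult_lt_0_compat; nra).
  exists (eps / (A * (M * A))). split; [apply Rdiv_lt_0_compat; lra|].
  intros Rr [HR HRd].
  assert (Had : adm A M nu Rr) by (repeat split; auto; lra).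
  pose proof (Phi_pos A M nu Rr Had). pose proof (Phi_le A M nu Rr Had).
  rewrite Rabs_right by lra.
  assert (A * (M * A) * Rr < eps).
  { apply (Rmult_lt_reg_r (/ (A * (M * A)))); [apply Rinv_0_lt_compat; lra|].
    replace (A * (M * A) * Rr * / (A * (M * A))) with Rr by (field; lra). exact HRd. }
  lra.
Qed.

Lemma gamma_pos A M nu : 0 < A -> 0 < M -> 1/2 <= nu < 1 -> 0 < gamma A M nu.
Proof.
  intros HA HM Hnu. destruct (scale_factor_spec A M HA HM) as [Hc _].
  pose proof (limit_slope_pos nu Hnu).
  unfold gamma. apply Rmult_lt_0_compat; [apply Rmult_lt_0_compat|]; auto.
Qed.

Lemma Phi_lt_gamma A M nu Rr : adm A M nu Rr -> Phi A M nu Rr < gamma A M nu.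
Proof.
  intros [HA [HM [Hnu HR]]]. destruct (scale_factor_spec A M HA HM) as [Hc _].
  pose proof (slope_lt_limit nu (sqrt (M * A) * Rr) Hnu ltac:(nra)).
  unfold Phi, gamma. apply Rmult_lt_compat_l; nra.
Qed.

Lemma Phi_tends_to_gamma A M nu : 0 < A -> 0 < M -> 1/2 <= nu < 1 ->
  forall eps, 0 < eps -> exists K, 0 < K /\
    forall Rr, K < Rr -> Rabs (Phi A M nu Rr - gamma A M nu) < eps.
Proof.
  intros HA HM Hnu eps Heps.
  destruct (scale_factor_spec A M HA HM) as [Hc _]. set (c := sqrt (M * A)) in *.
  assert (HAc : 0 < A * c) by nra.
  destruct (slope_tends_to_limit nu Hnu (eps / (A * c)) ltac:(apply Rdiv_lt_0_compat; lra))
    as [K [HK H]].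
  exists (K / c). split; [apply Rdiv_lt_0_compat; lra|].
  intros Rr HR.
  assert (HKR : K < c * Rr).
  { apply (Rmult_lt_reg_r (/ c)); [apply Rinv_0_lt_compat; lra|].
    replace (c * Rr * / c) with Rr by (field; lra). exact HR. }
  specialize (H (c * Rr) HKR).
  unfold Phi, gamma. fold c.
  replace (A * c * slope nu (c * Rr) - A * c * limit_slope nu)
    with (- (A * c * (limit_slope nu - slope nu (c * Rr)))) by ring.
  rewrite Rabs_Ropp, Rabs_right by (apply Rle_ge, Rmult_le_pos; lra).
  apply (Rmult_lt_reg_r (/ (A * c))); [apply Rinv_0_lt_compat; lra|].
  replace (A * c * (limit_slope nu - slope nu (c * Rr)) * / (A * c))
    with (limit_slope nu - slope nu (c * Rr)) by (field; lra).
  unfold Rdiv in H. lra.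
Qed.

Lemma gamma_cont3 : cont3_on (fun A M nu => 0 < A /\ 0 < M /\ 1/2 <= nu < 1) gamma.
Proof.
  intros A M nu [HA [HM Hnu]] eps Heps.
  set (D := fun a b c (_ : R) => 0 < a /\ 0 < b /\ 1/2 <= c < 1).
  assert (H : cont4_at D (fun a b c _ => gamma a b c) A M nu 0).
  { apply (cont4_at_mult D A M nu 0 (fun a b _ _ => a * sqrt (b * a))
      (fun _ _ c _ => limit_slope c)); [apply cont4_at_scale_factor; auto|].
    apply (cont4_at_comp1 D A M nu 0 limit_slope (fun _ _ c _ => c));
      [apply cont4_at_thd|apply limit_slope_continuity; auto]. }
  destruct (H eps Heps) as [d [Hd H2]]. exists d; split; auto.
  intros a' b' c' Hd' H1 H3 H4. apply (H2 a' b' c' 0); auto.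
  rewrite Rminus_0_r, Rabs_R0; auto.
Qed.

Lemma gamma_strict_incr_A A1 A2 M nu : 0 < A1 -> A1 < A2 -> 0 < M -> 1/2 <= nu < 1 ->
  gamma A1 M nu < gamma A2 M nu.
Proof.
  intros H1 H12 HM Hnu. unfold gamma. pose proof (limit_slope_pos nu Hnu).
  apply Rmult_lt_compat_r; auto.
  assert (sqrt (M * A1) < sqrt (M * A2)) by (apply sqrt_lt_1_alt; nra).
  assert (0 < sqrt (M * A1)) by (apply sqrt_lt_R0; nra). nra.
Qed.

Lemma gamma_strict_incr_M A M1 M2 nu : 0 < A -> 0 < M1 -> M1 < M2 -> 1/2 <= nu < 1 ->
  gamma A M1 nu < gamma A M2 nu.
Proof.
  intros HA H1 H12 Hnu. unfold gamma. pose proof (limit_slope_pos nu Hnu).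
  apply Rmult_lt_compat_r; auto. apply Rmult_lt_compat_l; auto. apply sqrt_lt_1_alt; nra.
Qed.

Lemma gamma_strict_decr_nu A M nu1 nu2 : 0 < A -> 0 < M -> 1/2 <= nu1 -> nu1 < nu2 -> nu2 < 1 ->
  gamma A M nu2 < gamma A M nu1.
Proof.
  intros HA HM H1 H12 H2. destruct (scale_factor_spec A M HA HM) as [Hc _]. unfold gamma.
  apply Rmult_lt_compat_l; [nra|]. apply limit_slope_strict_decr; auto.
Qed.

Lemma gamma_le A M nu : 0 < A -> 0 < M -> 1/2 <= nu < 1 -> gamma A M nu <= A * sqrt (M * A) * (1 - nu).
Proof.
  intros HA HM Hnu. destruct (scale_factor_spec A M HA HM) as [Hc _].
  unfold gamma. apply Rmult_le_compat_l; [nra|]. apply limit_slope_le; auto.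
Qed.

Lemma gamma_vanishes_at_1 A M : 0 < A -> 0 < M ->
  forall eps, 0 < eps -> exists delta, 0 < delta /\
    forall nu, 1/2 <= nu < 1 -> 1 - delta < nu -> Rabs (gamma A M nu) < eps.
Proof.
  intros HA HM eps Heps. destruct (scale_factor_spec A M HA HM) as [Hc _].
  assert (HAc : 0 < A * sqrt (M * A)) by nra.
  exists (eps / (A * sqrt (M * A))). split; [apply Rdiv_lt_0_compat; lra|].
  intros nu Hnu Hd. pose proof (gamma_pos A M nu HA HM Hnu). pose proof (gamma_le A M nu HA HM Hnu).
  rewrite Rabs_right by lra.
  assert (A * sqrt (M * A) * (1 - nu) < eps); [|lra].
  apply (Rmult_lt_reg_r (/ (A * sqrt (M * A)))); [apply Rinv_0_lt_compat; lra|].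
  replace (A * sqrt (M * A) * (1 - nu) * / (A * sqrt (M * A))) with (1 - nu) by (field; lra).
  unfold Rdiv in Hd. lra.
Qed.

Lemma Phi_R_strict_incr A M nu : 0 < A -> 0 < M -> 1/2 <= nu < 1 ->
  strict_incr_on (fun Rr => 0 < Rr) (Phi A M nu).
Proof.
  intros HA HM Hnu x y Hx Hy Hxy. destruct (scale_factor_spec A M HA HM) as [Hc _].
  unfold Phi. apply Rmult_lt_compat_l; [nra|]. apply slope_strict_incr; auto; nra.
Qed.

Lemma Phi_R_homeo A M nu : 0 < A -> 0 < M -> 1/2 <= nu < 1 ->
  homeo_onto (fun Rr => 0 < Rr) (fun y => 0 < y < gamma A M nu) (Phi A M nu).
Proof.
  intros HA HM Hnu.
  apply homeo_of_strict_incr; [intros x y z; lra|apply Phi_R_strict_incr; auto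
    |apply Phi_cont_R; auto| |].
  - intros x Hx. assert (Had : adm A M nu x) by (repeat split; auto; lra).
    split; [apply Phi_pos|apply Phi_lt_gamma]; auto.
  - intros y [Hy1 Hy2].
    assert (HAMA : 0 < A * (M * A)) by (apply Rmult_lt_0_compat; nra).
    set (R1 := y / (A * (M * A))).
    assert (HR1 : 0 < R1) by (unfold R1; apply Rdiv_lt_0_compat; lra).
    assert (P1 : Phi A M nu R1 < y).
    { pose proof (Phi_le A M nu R1 ltac:(repeat split; auto; lra)).
      assert (A * (M * A) * R1 = y) by (unfold R1; field; lra). lra. }
    destruct (Phi_tends_to_gamma A M nu HA HM Hnu (gamma A M nu - y) ltac:(lra)) as [K [HK HKl]].
    set (R2 := Rmax K R1 + 1).
    assert (HR2 : K < R2 /\ R1 < R2) by (unfold R2, Rmax; destruct Rle_dec; lra).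
    assert (P2 : y < Phi A M nu R2) by (specialize (HKl R2 ltac:(lra)); apply Rabs_def2 in HKl; lra).
    destruct (IVT_Icc R1 R2 (Phi A M nu) y ltac:(lra)) as [x [Hx Ex]].
    + apply (cont_on_subset (fun Rr => 0 < Rr)); [unfold Icc; intros; lra|].
      apply Phi_cont_R; auto.
    + rewrite Rmin_left, Rmax_right; lra.
    + exists x. unfold Icc in Hx. split; [lra|auto].
Qed.

Lemma Phi_nu_strict_decr A M Rr : 0 < A -> 0 < M -> 0 < Rr ->
  strict_decr_on (fun nu => 1/2 <= nu < 1) (fun nu => Phi A M nu Rr).
Proof.
  intros HA HM HR x y Hx Hy Hxy. destruct (scale_factor_spec A M HA HM) as [Hc _].
  unfold Phi. apply Rmult_lt_compat_l; [nra|]. apply slope_strict_decr_nu; try lra. nra.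
Qed.

Lemma Phi_nu_homeo A M Rr : 0 < A -> 0 < M -> 0 < Rr ->
  homeo_onto (fun nu => 1/2 <= nu < 1) (fun y => 0 < y <= Phi A M (1/2) Rr)
    (fun nu => Phi A M nu Rr).
Proof.
  intros HA HM HR. pose proof (Phi_nu_strict_decr A M Rr HA HM HR) as Hdec.
  apply homeo_of_strict_decr; [intros x y z; lra|auto|apply Phi_cont_nu; auto| |].
  - intros x Hx. split; [apply Phi_pos; repeat split; auto; lra|].
    destruct (Req_dec x (1/2)) as [->|E]; [lra|]. left. apply Hdec; lra.
  - intros y [Hy1 Hy2].
    destruct (Req_dec y (Phi A M (1/2) Rr)) as [E|E]; [exists (1/2); split; [lra|auto]|].
    destruct (scale_factor_spec A M HA HM) as [Hc _]. assert (HAc : 0 < A * sqrt (M * A)) by nra.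
    set (e := Rmin (1/4) (y / (2 * (A * sqrt (M * A))))).
    assert (He : 0 < e /\ e <= 1/4 /\ e <= y / (2 * (A * sqrt (M * A)))).
    { assert (0 < y / (2 * (A * sqrt (M * A)))) by (apply Rdiv_lt_0_compat; lra).
      unfold e, Rmin; destruct Rle_dec; lra. }
    assert (P1 : Phi A M (1 - e) Rr < y).
    { pose proof (Phi_lt_gamma A M (1 - e) Rr ltac:(repeat split; auto; lra)).
      pose proof (gamma_le A M (1 - e) HA HM ltac:(lra)).
      assert (A * sqrt (M * A) * (1 - (1 - e)) <= y / 2).
      { replace (1 - (1 - e)) with e by ring.
        apply Rle_trans with (A * sqrt (M * A) * (y / (2 * (A * sqrt (M * A))))).
        - apply Rmult_le_compat_l; lra.
        - right; field; lra. }
      lra. }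
    destruct (IVT_Icc (1/2) (1 - e) (fun nu => Phi A M nu Rr) y ltac:(lra)) as [x [Hx Ex]].
    + apply (cont_on_subset (fun nu => 1/2 <= nu < 1)); [unfold Icc; intros; lra|].
      apply Phi_cont_nu; auto.
    + rewrite Rmin_right, Rmax_left; lra.
    + exists x. unfold Icc in Hx. split; [lra|auto].
Qed.

Theorem lemma2p2 :
  (* existence of a positive solution *)
  (forall A M nu Rr, adm A M nu Rr -> exists w, pos_sol A M nu Rr w) /\
  (* uniqueness on [-R,R] *)
  (forall A M nu Rr w v, adm A M nu Rr -> pos_sol A M nu Rr w -> pos_sol A M nu Rr v ->
     forall x, Icc (- Rr) Rr x -> w x = v x) /\
  (* evenness and bounds *)
  (forall A M nu Rr w, adm A M nu Rr -> pos_sol A M nu Rr w ->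
     (forall x, Icc (- Rr) Rr x -> w (- x) = w x) /\
     (forall x, - Rr < x < Rr -> nu * A < w x < A)) /\
  exists Phi : R -> R -> R -> R -> R,
    (* Phi(A,M,nu,R) = w'(-R) *)
    (forall A M nu Rr w, adm A M nu Rr -> pos_sol A M nu Rr w ->
       deriv_within (Icc (- Rr) Rr) w (- Rr) (Phi A M nu Rr)) /\
    (* (1) *)
    (forall A M nu Rr, adm A M nu Rr -> 0 < Phi A M nu Rr) /\
    cont4_on adm Phi /\
    (* (2) *)
    (forall A M nu, 0 < A -> 0 < M -> 1/2 <= nu < 1 ->
       forall eps, 0 < eps -> exists delta, 0 < delta /\
         forall Rr, 0 < Rr < delta -> Rabs (Phi A M nu Rr) < eps) /\
    (* (3) *)
    (exists gamma : R -> R -> R -> R,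
       (forall A M nu, 0 < A -> 0 < M -> 1/2 <= nu < 1 ->
          0 < gamma A M nu /\
          (forall eps, 0 < eps -> exists K, forall Rr, K < Rr ->
             Rabs (Phi A M nu Rr - gamma A M nu) < eps)) /\
       cont3_on (fun A M nu => 0 < A /\ 0 < M /\ 1/2 <= nu < 1) gamma /\
       (forall A1 A2 M nu, 0 < A1 -> A1 < A2 -> 0 < M -> 1/2 <= nu < 1 ->
          gamma A1 M nu < gamma A2 M nu) /\
       (forall A M1 M2 nu, 0 < A -> 0 < M1 -> M1 < M2 -> 1/2 <= nu < 1 ->
          gamma A M1 nu < gamma A M2 nu) /\
       (forall A M nu1 nu2, 0 < A -> 0 < M -> 1/2 <= nu1 -> nu1 < nu2 -> nu2 < 1 ->
          gamma A M nu2 < gamma A M nu1) /\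
       (forall A M, 0 < A -> 0 < M ->
          forall eps, 0 < eps -> exists delta, 0 < delta /\
            forall nu, 1/2 <= nu < 1 -> 1 - delta < nu -> Rabs (gamma A M nu) < eps) /\
       (forall A M nu, 0 < A -> 0 < M -> 1/2 < nu < 1 ->
          0 < gamma A M nu < gamma A M (1/2)) /\
       (* (4) *)
       (forall A M nu, 0 < A -> 0 < M -> 1/2 <= nu < 1 ->
          strict_incr_on (fun Rr => 0 < Rr) (Phi A M nu) /\
          homeo_onto (fun Rr => 0 < Rr) (fun y => 0 < y < gamma A M nu) (Phi A M nu))) /\
    (* (5) *)
    (forall A M Rr, 0 < A -> 0 < M -> 0 < Rr ->
       strict_decr_on (fun nu => 1/2 <= nu < 1) (fun nu => Phi A M nu Rr) /\
       homeo_onto (fun nu => 1/2 <= nu < 1) (fun y => 0 < y <= Phi A M (1/2) Rr)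
                  (fun nu => Phi A M nu Rr)).
Proof.
  split; [|split; [|split]].
  - intros A M nu Rr Had.
    destruct (exists_scaled_solution A M nu Rr Had) as [w [Hw _]]. exists w; exact Hw.
  - exact pos_sol_unique.
  - intros A M nu Rr w Had Hw.
    split; [exact (pos_sol_even A M nu Rr w Had Hw)|exact (pos_sol_strict_bounds A M nu Rr w Had Hw)].
  - exists Phi.
    split; [exact pos_sol_edge_deriv|].
    split; [exact Phi_pos|].
    split; [exact Phi_cont4|].
    split; [exact Phi_vanishes_at_0|].
    split.
    + exists gamma.
      split; [|split; [exact gamma_cont3|split; [exact gamma_strict_incr_A|split;
        [exact gamma_strict_incr_M|split; [exact gamma_strict_decr_nu|split;
        [exact gamma_vanishes_at_1|split]]]]]].
      * intros A M nu HA HM Hnu. split; [apply gamma_pos; auto|].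
        intros eps Heps. destruct (Phi_tends_to_gamma A M nu HA HM Hnu eps Heps) as [K [_ HK]].
        exists K; exact HK.
      * intros A M nu HA HM Hnu. split; [apply gamma_pos; auto; lra|].
        apply gamma_strict_decr_nu; auto; lra.
      * intros A M nu HA HM Hnu.
        split; [apply Phi_R_strict_incr|apply Phi_R_homeo]; auto.
    + intros A M Rr HA HM HR.
      split; [apply Phi_nu_strict_decr|apply Phi_nu_homeo]; auto.
Qed.
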